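(* Let $n\ge2$, $R>0$, $g(R)\in\mathbb{R}$. Suppose $f\in C^0((0,R))$ and $f\ge0$ in $(0,R)$, $f\not\equiv0$. Let $u^\varepsilon$ be the unique monotone increasing classical solution of problem $(P_\varepsilon)$, and define $w^\varepsilon=r^{n-1}u^\varepsilon_r$ and $v^\varepsilon=\Delta u^\varepsilon=u^\varepsilon_{rr}+\frac{n-1}{r}u^\varepsilon_r$. Then, at least for sufficiently small $\varepsilon>0$, there hold: (i) $\|u^\varepsilon\|_{C^0([0,R])}+\int_0^R|u^\varepsilon_r|^n\,dr\le C_0$; (ii) $\|u^\varepsilon\|_{C^1([0,R])}+\|w^\varepsilon\|_{C^0([0,R])}\le C_1$; (iii) $\|w^\varepsilon_r\|_{C^0([0,R])}\le C_2/\varepsilon$; (iv) $\|v^\varepsilon\|_{C^0([r_0,R])}\le \frac{C_3}{\varepsilon r_0^{n-1}}$ for all $0<r_0\le R$; (v) $\|v^\varepsilon_r\|_{C^0([r_0,R])}\le\frac{C_4}{\varepsilon r_0^{(n-1)^2}}$ for all $0<r_0\le R$; (vi) $\int_0^R|w^\varepsilon_r|^2dr+\int_0^Rr^{2(n-1)}|v^\varepsilon|^2dr\le C_5/\varepsilon$; (vii) $\varepsilon\int_0^Rr^{n-2-\alpha}|v^\varepsilon|^2dr+\int_0^Rr^{-\alpha}(u^\varepsilon_r)^nv^\varepsilon\,dr\le C_6/\varepsilon$ for all $\alpha<n-1$; (viii) $\varepsilon\int_0^Rr^{n-1}|v^\varepsilon_r|^2dr+\int_0^R(u^\varepsilon_r)^{n-1}|v^\varepsilon|^2dr\le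 C_7/\varepsilon$ for $n\ge3$; (ix) $\varepsilon\int_0^Rr^{2-\alpha}|v^\varepsilon_r|^2dr+\int_0^Rr^{1-\alpha}u^\varepsilon_r|v^\varepsilon|^2dr\le C_8/\varepsilon$ for $n=2$, $\alpha<1$; where $C_j=C_j(R,f,n)>0$, $j=0,\dots,8$, are $\varepsilon$-independent constants.
   Context: Subscripts $r$ denote $r$-derivatives. Problem $(P_\varepsilon)$, $\varepsilon>0$: $-\frac{\varepsilon}{r^{n-1}}\Big(r^{n-1}\Big(\frac{1}{r^{n-1}}(r^{n-1}u^\varepsilon_r)_r\Big)_r\Big)_r+\frac{1}{n r^{n-1}}((u^\varepsilon_r)^n)_r=f$ in $(0,R)$, $u^\varepsilon(R)=g(R)$, $u^\varepsilon_r(0)=0$, $|u^\varepsilon_{rr}(0)|<\infty$, $|u^\varepsilon_{rrr}(r)|=o(r^{-(n-1)})$ as $r\to0^+$, $u^\varepsilon_{rr}(R)+\frac{n-1}{R}u^\varepsilon_r(R)=\varepsilon$ (a classical solution satisfies these pointwise). *)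

From Stdlib Require Import Reals.
From Coquelicot Require Import Coquelicot.
Open Scope R_scope.

(* u is C^k near every point of P: on a neighbourhood of each x with P x,
   all derivatives of order <= k exist and the k-th one is continuous.
   (A function given on a closed interval that is C^k up to an endpoint
   extends to such a u, so this encodes C^k up to the boundary.) *)
Definition Ck_near (k : nat) (u : R -> R) (P : R -> Prop) : Prop :=
  forall x, P x -> exists d : R, 0 < d /\
    forall y, Rabs (y - x) < d ->
      (forall j, (j <= k)%nat -> ex_derive_n u j y) /\
      continuous (Derive_n u k) y.

Definition w_of (n : nat) (u : R -> R) (r : R) : R := r ^ (n - 1) * Derive u r.

Definition v_of (n : nat) (u : R -> R) (r : R) : R :=
  Derive (Derive u) r + (INR n - 1) / r * Derive u r.

Definition Peps_lhs (n : nat) (eps : R) (u : R -> R) (r : R) : R :=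
  - eps / r ^ (n - 1) *
    Derive (fun s => s ^ (n - 1) *
      Derive (fun t => / t ^ (n - 1) * Derive (fun x => x ^ (n - 1) * Derive u x) t) s) r
  + / (INR n * r ^ (n - 1)) * Derive (fun s => (Derive u s) ^ n) r.

(* classical solution of (P_eps) on [0,R], with boundary value g(R) = gR:
   u in C^2([0,R]) /\ C^3((0,R]) /\ C^4((0,R)), the equation pointwise in (0,R),
   u(R) = g(R), u_r(0) = 0, |u_rr(0)| < oo (automatic: u_rr(0) is a real number),
   r^{n-1} u_rrr(r) -> 0 as r -> 0+, and u_rr(R) + (n-1)/R u_r(R) = eps. *)
Definition classical_solution (n : nat) (Rr gR eps : R) (f : R -> R) (u : R -> R) : Prop :=
  Ck_near 2 u (fun r => 0 <= r <= Rr) /\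
  Ck_near 3 u (fun r => 0 < r <= Rr) /\
  Ck_near 4 u (fun r => 0 < r < Rr) /\
  (forall r, 0 < r < Rr -> Peps_lhs n eps u r = f r) /\
  u Rr = gR /\
  Derive u 0 = 0 /\
  filterlim (fun r => r ^ (n - 1) * Derive_n u 3 r) (at_right 0) (locally 0) /\
  Derive_n u 2 Rr + (INR n - 1) / Rr * Derive u Rr = eps.

Definition mono_incr_on (Rr : R) (u : R -> R) : Prop :=
  forall r s, 0 <= r -> r <= s -> s <= Rr -> u r <= u s.

Definition integral_eq (h : R -> R) (a b I : R) : Prop :=
  is_RInt_gen h (at_right a) (at_left b) I.

From Stdlib Require Import Reals Lra Lia Classical.
From Coquelicot Require Import Coquelicot.
Open Scope R_scope.

(* Write [v = Delta u], [w = r^(n-1) u_r] and [Q(r) = int_0^r s^(n-1) f(s) ds].  The equation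
   integrates once to [eps r^(n-1) v_r = u_r^n / n - Q], where [Q >= 0] is nondecreasing and does not
   depend on [eps].  A minimum principle for [v], using [v(R) = eps > 0], gives [v >= 0]; at an
   interior maximum of [u_r] one has [u_r^n / n <= Q], so [u_r], [u] and [w] are bounded uniformly,
   and [v_r >= - Q(R) / (eps r^(n-1))] yields the pointwise bounds on [w_r], [v] and [v_r].
   The integral estimates come from multiplying the integrated equation by weighted multiples of [v]
   (or [v_r]), integrating over [(a, R)], absorbing the [Q] terms by Young's inequality and letting
   [a -> 0+]; the remaining terms [Q^2 r^(1-n)] are bounded once and for all with the solution for
   [eps = 1], since [Q] does not depend on [eps]. *)

(** * Elementary real analysis *)

Lemma mean_value_is_derive (f df : R -> R) (a b : R) : a < b ->
  (forall c, a < c < b -> is_derive f c (df c)) ->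
  (forall c, a <= c <= b -> continuity_pt f c) ->
  exists c, a < c < b /\ f b - f a = df c * (b - a).
Proof.
  intros Hab Hd Hc.
  assert (pr1 : forall c, a < c < b -> derivable_pt f c).
  { intros c Hc'. exists (df c). apply is_derive_Reals. now apply Hd. }
  assert (pr2 : forall c, a < c < b -> derivable_pt id c).
  { intros c _. apply derivable_pt_id. }
  destruct (MVT f id a b pr1 pr2 Hab Hc) as [c [P HP]].
  { intros c _. apply derivable_continuous_pt, derivable_pt_id. }
  exists c; split; auto.
  rewrite (derive_pt_eq_0 f c (df c) (pr1 c P)) in HP.
  2: { apply is_derive_Reals; now apply Hd. }
  rewrite (derive_pt_eq_0 id c 1 (pr2 c P)) in HP.
  2: { apply derivable_pt_lim_id. }
  unfold id in HP. lra.
Qed.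

Lemma le_of_is_derive_nonneg (f df : R -> R) (a b : R) : a <= b ->
  (forall c, a < c < b -> is_derive f c (df c)) ->
  (forall c, a < c < b -> 0 <= df c) ->
  (forall c, a <= c <= b -> continuity_pt f c) -> f a <= f b.
Proof.
  intros Hab Hd Hp Hc. destruct (Req_dec a b) as [->|Hne]; [lra|].
  destruct (mean_value_is_derive f df a b) as [c [Hc1 Hc2]]; auto; try lra.
  assert (0 <= df c * (b - a)) by (apply Rmult_le_pos; [apply Hp; auto|lra]). lra.
Qed.

Lemma ge_of_is_derive_nonpos (f df : R -> R) (a b : R) : a <= b ->
  (forall c, a < c < b -> is_derive f c (df c)) ->
  (forall c, a < c < b -> df c <= 0) ->
  (forall c, a <= c <= b -> continuity_pt f c) -> f b <= f a.
Proof.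
  intros Hab Hd Hp Hc.
  assert (- f a <= - f b); [|lra].
  apply (le_of_is_derive_nonneg (fun x => - f x) (fun x => - df x) a b); auto.
  - intros c Hc'. exact (is_derive_opp f c (df c) (Hd c Hc')).
  - intros c Hc'. specialize (Hp c Hc'). lra.
  - intros c Hc'. apply continuity_pt_opp. now apply Hc.
Qed.

Lemma continuity_pt_eps (f : R -> R) x : continuity_pt f x ->
  forall e, 0 < e -> exists d, 0 < d /\ forall y, Rabs (y - x) < d -> Rabs (f y - f x) < e.
Proof.
  intros H e He. destruct (H e He) as [d [Hd H']].
  exists d; split; auto. intros y Hy.
  destruct (Req_dec y x) as [->|Hne].
  - rewrite Rminus_diag, Rabs_R0; auto.
  - apply H'. split; [split; [exact I| auto]|]. simpl. unfold R_dist. auto.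
Qed.

Lemma ex_derive_continuity_pt (f : R -> R) x : ex_derive f x -> continuity_pt f x.
Proof. intros H. apply continuity_pt_filterlim. exact (ex_derive_continuous f x H). Qed.

Lemma is_derive_nonneg_right (f : R -> R) x l d : is_derive f x l -> 0 < d ->
  (forall h, 0 < h < d -> f x <= f (x + h)) -> 0 <= l.
Proof.
  intros Hd Hdp Hm. apply is_derive_Reals in Hd.
  destruct (Rle_or_lt 0 l) as [|Hl]; auto.
  destruct (Hd (- l / 2)) as [dl Hdl]; [lra|].
  set (h := Rmin (d/2) (dl/2)).
  assert (Hh1 : h <= d / 2) by apply Rmin_l.
  assert (Hh2 : h <= dl / 2) by apply Rmin_r.
  pose proof (cond_pos dl).
  assert (Hh : 0 < h) by (apply Rmin_glb_lt; lra).
  specialize (Hdl h (Rgt_not_eq _ _ Hh) ltac:(rewrite Rabs_pos_eq; lra)).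
  specialize (Hm h ltac:(lra)).
  assert (0 <= (f (x + h) - f x) / h) by (apply Rdiv_le_0_compat; lra).
  apply Rabs_lt_between in Hdl. lra.
Qed.

Lemma is_derive_nonneg_left (f : R -> R) x l d : is_derive f x l -> 0 < d ->
  (forall h, 0 < h < d -> f (x - h) <= f x) -> 0 <= l.
Proof.
  intros Hd Hdp Hm. apply is_derive_Reals in Hd.
  destruct (Rle_or_lt 0 l) as [|Hl]; auto.
  destruct (Hd (- l / 2)) as [dl Hdl]; [lra|].
  set (h := Rmin (d/2) (dl/2)).
  assert (Hh1 : h <= d / 2) by apply Rmin_l.
  assert (Hh2 : h <= dl / 2) by apply Rmin_r.
  pose proof (cond_pos dl).
  assert (Hh : 0 < h) by (apply Rmin_glb_lt; lra).
  specialize (Hdl (- h) ltac:(lra) ltac:(rewrite Rabs_Ropp, Rabs_pos_eq; lra)).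
  specialize (Hm h ltac:(lra)).
  replace (x + - h) with (x - h) in Hdl by ring.
  assert (0 <= (f (x - h) - f x) / - h).
  { replace ((f (x - h) - f x) / - h) with ((f x - f (x - h)) / h) by (field; lra).
    apply Rdiv_le_0_compat; lra. }
  apply Rabs_lt_between in Hdl. lra.
Qed.

Lemma is_derive_pos_right (f : R -> R) x l : is_derive f x l -> 0 < l -> f x = 0 ->
  exists d, 0 < d /\ forall h, 0 < h < d -> 0 < f (x + h).
Proof.
  intros Hd Hl H0. apply is_derive_Reals in Hd.
  destruct (Hd (l / 2)) as [dl Hdl]; [lra|].
  exists dl; split; [apply cond_pos|]. intros h Hh.
  specialize (Hdl h (Rgt_not_eq _ _ (proj1 Hh)) ltac:(rewrite Rabs_pos_eq; lra)).
  rewrite H0 in Hdl. apply Rabs_lt_between in Hdl.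
  replace (f (x + h)) with (((f (x + h) - 0) / h) * h) by (field; lra).
  apply Rmult_lt_0_compat; lra.
Qed.

Lemma is_derive_local_max (g : R -> R) x l d : is_derive g x l -> 0 < d ->
  (forall y, Rabs (y - x) < d -> g y <= g x) -> l = 0.
Proof.
  intros Hd Hdp Hm.
  assert (0 <= l).
  { apply (is_derive_nonneg_left g x l d Hd Hdp). intros h Hh. apply Hm.
    replace (x - h - x) with (- h) by ring. rewrite Rabs_Ropp, Rabs_pos_eq; lra. }
  assert (0 <= - l).
  { apply (is_derive_nonneg_right (fun y => - g y) x (- l) d (is_derive_opp g x l Hd) Hdp).
    intros h Hh. assert (g (x + h) <= g x); [|lra].
    apply Hm. replace (x + h - x) with h by ring. rewrite Rabs_pos_eq; lra. }
  lra.
Qed.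

Lemma is_derive_local_min (g : R -> R) x l d : is_derive g x l -> 0 < d ->
  (forall y, Rabs (y - x) < d -> g x <= g y) -> l = 0.
Proof.
  intros Hd Hdp Hm.
  assert (- l = 0); [|lra].
  apply (is_derive_local_max (fun y => - g y) x (- l) d (is_derive_opp g x l Hd) Hdp).
  intros y Hy. specialize (Hm y Hy). lra.
Qed.

Lemma is_derive_eq (f : R -> R) x l l' : is_derive f x l -> l = l' -> is_derive f x l'.
Proof. intros H ->; exact H. Qed.

Lemma is_derive_Rpower x a : 0 < x -> is_derive (fun y => Rpower y a) x (a * Rpower x (a - 1)).
Proof. intros Hx. apply is_derive_Reals. apply derivable_pt_lim_power; auto. Qed.

Lemma pow_lt_compat_nonneg a b k : 0 <= a < b -> (1 <= k)%nat -> a ^ k < b ^ k.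
Proof.
  intros [Ha Hab] Hk. induction k as [|k IH]; [lia|].
  destruct k as [|k]; [simpl; lra|].
  assert (a ^ S k < b ^ S k) by (apply IH; lia).
  assert (0 <= a ^ S k) by (apply pow_le; auto).
  simpl in *. nra.
Qed.

Lemma pow_le_one x k : 0 <= x <= 1 -> x ^ k <= 1.
Proof.
  intros Hx. induction k as [|k IH]; simpl; [lra|].
  assert (0 <= x ^ k) by (apply pow_le; lra). nra.
Qed.

Lemma pow_abs_le_abs x k : Rabs x <= 1 -> (1 <= k)%nat -> Rabs (x ^ k) <= Rabs x.
Proof.
  intros Hx Hk. rewrite <- RPow_abs. replace k with (S (k - 1)) by lia. simpl.
  pose proof (Rabs_pos x). pose proof (pow_le_one (Rabs x) (k - 1) ltac:(lra)).
  assert (0 <= Rabs x ^ (k - 1)) by (apply pow_le; lra). nra.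
Qed.

Lemma pow_ge_self x k : 1 <= x -> (1 <= k)%nat -> x <= x ^ k.
Proof.
  intros Hx Hk. replace k with (S (k - 1)) by lia. simpl.
  pose proof (pow_R1_Rle x (k - 1) Hx). nra.
Qed.

Lemma pow_le_inv eps k : 0 < eps < 1 -> eps ^ k <= / eps.
Proof.
  intros He. apply Rle_trans with 1.
  - apply pow_le_one; lra.
  - rewrite <- Rinv_1. apply Rinv_le_contravar; lra.
Qed.

Lemma le_inv_of_lt_one eps : 0 < eps < 1 -> eps <= / eps.
Proof. intros He. rewrite <- (pow_1 eps) at 1. now apply pow_le_inv. Qed.

Lemma INR_sub_1 k : (1 <= k)%nat -> INR (k - 1) = INR k - 1.
Proof. intros; rewrite minus_INR by lia; simpl; ring. Qed.

Lemma INR_sub_2 k : (2 <= k)%nat -> INR (k - 2) = INR k - 2.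
Proof. intros; rewrite minus_INR by lia; simpl; ring. Qed.

Lemma Rpower_pos r a : 0 < Rpower r a.
Proof. apply exp_pos. Qed.

Lemma young_ineq X Y k : 0 < k -> X * Y <= k * X ^ 2 + Y ^ 2 / (4 * k).
Proof.
  intros Hk. assert (0 <= (2 * k * X - Y) ^ 2) by apply pow2_ge_0.
  apply Rmult_le_reg_r with (4 * k); [lra|].
  replace ((k * X ^ 2 + Y ^ 2 / (4 * k)) * (4 * k)) with (4 * k * k * X ^ 2 + Y ^ 2) by (field; lra).
  nra.
Qed.

Lemma cpt_plus f g x : continuity_pt f x -> continuity_pt g x -> continuity_pt (fun y => f y + g y) x.
Proof. apply continuity_pt_plus. Qed.
Lemma cpt_minus f g x : continuity_pt f x -> continuity_pt g x -> continuity_pt (fun y => f y - g y) x.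
Proof. apply continuity_pt_minus. Qed.
Lemma cpt_mult f g x : continuity_pt f x -> continuity_pt g x -> continuity_pt (fun y => f y * g y) x.
Proof. apply continuity_pt_mult. Qed.
Lemma cpt_div f g x : continuity_pt f x -> continuity_pt g x -> g x <> 0 -> continuity_pt (fun y => f y / g y) x.
Proof. apply continuity_pt_div. Qed.
Lemma cpt_const (c : R) x : continuity_pt (fun _ => c) x.
Proof. apply continuity_pt_const. intros a b; reflexivity. Qed.
Lemma cpt_id x : continuity_pt (fun y => y) x.
Proof. apply derivable_continuous_pt, derivable_pt_id. Qed.
Lemma cpt_pow f k x : continuity_pt f x -> continuity_pt (fun y => f y ^ k) x.
Proof.
  intros H. apply (continuity_pt_comp f (fun y => y ^ k)); auto.
  apply derivable_continuous_pt, derivable_pt_pow.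
Qed.
Lemma cpt_abs f x : continuity_pt f x -> continuity_pt (fun y => Rabs (f y)) x.
Proof. intros H. apply (continuity_pt_comp f Rabs); auto. apply Rcontinuity_abs. Qed.
Lemma cpt_Rpower a x : 0 < x -> continuity_pt (fun y => Rpower y a) x.
Proof. intros Hx. apply ex_derive_continuity_pt. eexists. now apply is_derive_Rpower. Qed.

Ltac cont_tac :=
  repeat (first
    [ assumption | (apply cpt_div; [| |]) | apply cpt_minus | apply cpt_plus | apply cpt_mult
    | apply cpt_const | apply cpt_id | apply cpt_pow | apply cpt_abs | (apply cpt_Rpower; lra) ]); auto.

(** * Riemann integrals on [(0, R]] *)

Lemma locally_of_interval a b r (P : R -> Prop) : a < r < b ->
  (forall y, a < y < b -> P y) -> locally r P.
Proof.
  intros Hr HP. set (d := Rmin (r - a) (b - r)).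
  assert (d <= r - a) by apply Rmin_l. assert (d <= b - r) by apply Rmin_r.
  assert (Hd : 0 < d) by (apply Rmin_glb_lt; lra).
  exists (mkposreal d Hd). intros y Hy. apply HP.
  assert (Hy' : Rabs (y - r) < d) by exact Hy. apply Rabs_lt_between in Hy'. lra.
Qed.

Lemma at_right_of_interval a b (P : R -> Prop) : a < b ->
  (forall y, a < y < b -> P y) -> at_right a P.
Proof.
  intros Hab HP. exists (mkposreal (b - a) ltac:(lra)). intros y Hy Hay. apply HP.
  assert (Hy' : Rabs (y - a) < b - a) by exact Hy. apply Rabs_lt_between in Hy'. lra.
Qed.

Lemma at_left_of_interval a b (P : R -> Prop) : a < b ->
  (forall y, a < y < b -> P y) -> at_left b P.
Proof.
  intros Hab HP. exists (mkposreal (b - a) ltac:(lra)). intros y Hy Hyb. apply HP.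
  assert (Hy' : Rabs (y - b) < b - a) by exact Hy. apply Rabs_lt_between in Hy'. lra.
Qed.

Lemma ex_RInt_cont (h : R -> R) a b : a <= b ->
  (forall x, a <= x <= b -> continuity_pt h x) -> ex_RInt h a b.
Proof.
  intros Hab Hc. apply (@ex_RInt_continuous R_CompleteNormedModule). intros z Hz.
  rewrite Rmin_left, Rmax_right in Hz by lra.
  apply continuity_pt_filterlim. apply Hc; lra.
Qed.

Lemma ex_RInt_pos (h : R -> R) Rr a b : (forall x, 0 < x <= Rr -> continuity_pt h x) ->
  0 < a <= Rr -> 0 < b <= Rr -> ex_RInt h a b.
Proof.
  intros Hc Ha Hb.
  destruct (Rle_or_lt a b).
  - apply ex_RInt_cont; auto. intros x Hx. apply Hc; lra.
  - apply ex_RInt_swap, ex_RInt_cont; [lra|]. intros x Hx. apply Hc; lra.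
Qed.

Lemma RInt_le_const (h : R -> R) a b B : a <= b -> (forall x, a <= x <= b -> continuity_pt h x) ->
  (forall x, a <= x <= b -> Rabs (h x) <= B) -> RInt h a b <= (b - a) * B.
Proof.
  intros Hab Hc Hb.
  pose proof (abs_RInt_le_const h a b B Hab (ex_RInt_cont h a b Hab Hc) Hb).
  pose proof (Rle_abs (RInt h a b)). lra.
Qed.

Lemma RInt_linear_comb (h1 h2 : R -> R) (c1 c2 : R) a b : a <= b ->
  (forall x, a <= x <= b -> continuity_pt h1 x) ->
  (forall x, a <= x <= b -> continuity_pt h2 x) ->
  RInt (fun x => c1 * h1 x + c2 * h2 x) a b = c1 * RInt h1 a b + c2 * RInt h2 a b.
Proof.
  intros Hab H1 H2.
  pose proof (ex_RInt_cont h1 a b Hab H1) as E1. pose proof (ex_RInt_cont h2 a b Hab H2) as E2.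
  apply (@is_RInt_unique R_CompleteNormedModule), (@is_RInt_plus R_NormedModule);
    apply (@is_RInt_scal R_NormedModule), (@RInt_correct R_CompleteNormedModule); auto.
Qed.

Lemma RInt_le_antiderivative (h H D : R -> R) (c a b : R) : a <= b ->
  (forall x, a <= x <= b -> is_derive H x (D x)) ->
  (forall x, a <= x <= b -> continuity_pt D x) ->
  (forall x, a <= x <= b -> continuity_pt h x) ->
  (forall x, a < x < b -> h x <= D x + c) ->
  RInt h a b <= H b - H a + c * (b - a).
Proof.
  intros Hab Hd Hdc Hc Hle.
  assert (HD : is_RInt D a b (H b - H a)).
  { apply (@is_RInt_derive R_CompleteNormedModule).
    - intros x Hx. rewrite Rmin_left, Rmax_right in Hx by lra. now apply Hd.
    - intros x Hx. rewrite Rmin_left, Rmax_right in Hx by lra.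
      apply continuity_pt_filterlim. now apply Hdc. }
  assert (HDc : is_RInt (fun x => D x + c) a b (H b - H a + c * (b - a))).
  { apply (@is_RInt_plus R_NormedModule); auto.
    replace (c * (b - a)) with (scal (b - a) c) by (unfold scal; simpl; unfold mult; simpl; ring).
    apply (@is_RInt_const R_NormedModule). }
  apply (is_RInt_le h (fun x => D x + c) a b); auto.
  apply (@RInt_correct R_CompleteNormedModule). apply ex_RInt_cont; auto.
Qed.

Lemma RInt_le_antiderivative_plus (h k H D : R -> R) (c a b : R) : a <= b ->
  (forall x, a <= x <= b -> is_derive H x (D x)) ->
  (forall x, a <= x <= b -> continuity_pt D x) ->
  (forall x, a <= x <= b -> continuity_pt h x) ->
  (forall x, a <= x <= b -> continuity_pt k x) ->
  (forall x, a < x < b -> h x <= D x + k x + c) ->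
  RInt h a b <= H b - H a + RInt k a b + c * (b - a).
Proof.
  intros Hab Hd Hdc Hc Hk Hle.
  assert (E : RInt (fun x => 1 * h x + (-1) * k x) a b = 1 * RInt h a b + (-1) * RInt k a b)
    by (apply RInt_linear_comb; auto).
  assert (RInt (fun x => 1 * h x + (-1) * k x) a b <= H b - H a + c * (b - a)); [|lra].
  apply (RInt_le_antiderivative _ H D c a b); auto.
  - intros x Hx. apply cpt_plus; apply cpt_mult; try apply cpt_const; auto.
  - intros x Hx. specialize (Hle x Hx). lra.
Qed.

Lemma filterlim_Rminus {T} {F : (T -> Prop) -> Prop} {FF : Filter F} (f g : T -> R) lf lg :
  filterlim f F (locally lf) -> filterlim g F (locally lg) ->
  filterlim (fun x => f x - g x) F (locally (lf - lg)).
Proof.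
  intros Hf Hg.
  apply (filterlim_comp_2 (G := locally lf) (H := locally (- lg)) f (fun x => - g x) Rplus); auto.
  - eapply filterlim_comp; [exact Hg | apply (filterlim_opp (V := R_NormedModule))].
  - exact (filterlim_plus (V := R_NormedModule) lf (- lg)).
Qed.

Lemma filterlim_RInt_at_left (h : R -> R) c b : c < b ->
  (forall x, c <= x <= b -> continuity_pt h x) ->
  filterlim (fun y => RInt h c y) (at_left b) (locally (RInt h c b)).
Proof.
  intros Hcb Hc.
  destruct (continuity_ab_maj (fun x => Rabs (h x)) c b) as [xm [Hxm _]]; [lra| |].
  { intros x Hx. apply cpt_abs, Hc, Hx. }
  set (Mh := Rabs (h xm) + 1).
  assert (HMh : 0 < Mh) by (unfold Mh; pose proof (Rabs_pos (h xm)); lra).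
  apply filterlim_locally. intros e. pose proof (cond_pos e).
  assert (He : 0 < e / Mh) by (apply Rdiv_lt_0_compat; lra).
  set (d := Rmin (e / Mh) (b - c)).
  assert (d <= e / Mh) by apply Rmin_l. assert (d <= b - c) by apply Rmin_r.
  exists (mkposreal d ltac:(apply Rmin_glb_lt; lra)).
  intros y Hy Hyb. assert (Hy' : Rabs (y - b) < d) by exact Hy. apply Rabs_lt_between in Hy'.
  change (Rabs (RInt h c y - RInt h c b) < e).
  rewrite <- (RInt_Chasles h c y b) by (apply ex_RInt_cont; [lra|intros; apply Hc; lra]).
  change (plus (RInt h c y) (RInt h y b)) with (RInt h c y + RInt h y b).
  replace (RInt h c y - (RInt h c y + RInt h y b)) with (- RInt h y b) by ring.
  rewrite Rabs_Ropp. apply Rle_lt_trans with ((b - y) * Mh).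
  - apply abs_RInt_le_const; [lra| apply ex_RInt_cont; [lra|intros; apply Hc; lra]|].
    intros t Ht. assert (Rabs (h t) <= Rabs (h xm)) by (apply Hxm; lra). unfold Mh; lra.
  - apply Rlt_le_trans with (e / Mh * Mh); [apply Rmult_lt_compat_r; lra|].
    right. field. lra.
Qed.

(* For a nonnegative integrand the partial integrals increase as the lower end tends to [0];
   boundedness gives the limit by completeness. *)
Lemma RInt_improper_lim (h : R -> R) (Rr B : R) : 0 < Rr ->
  (forall x, 0 < x <= Rr -> continuity_pt h x) ->
  (forall x, 0 < x <= Rr -> 0 <= h x) ->
  (forall a, 0 < a < Rr -> RInt h a Rr <= B) ->
  exists I, filterlim (fun a => RInt h a Rr) (at_right 0) (locally I).
Proof.
  intros HR Hc Hp HB.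
  assert (Hmono : forall a a', 0 < a <= a' -> a' <= Rr -> RInt h a' Rr <= RInt h a Rr).
  { intros a a' Ha Ha'.
    rewrite <- (RInt_Chasles h a a' Rr) by (apply (ex_RInt_pos h Rr); auto; lra).
    assert (0 <= RInt h a a'); [|change (plus (RInt h a a') (RInt h a' Rr)) with
      (RInt h a a' + RInt h a' Rr); lra].
    apply RInt_ge_0; [lra| apply (ex_RInt_pos h Rr); auto; lra|].
    intros x Hx; apply Hp; lra. }
  set (E := fun y => exists a, 0 < a < Rr /\ y = RInt h a Rr).
  destruct (completeness E) as [I [HI1 HI2]].
  { exists B. intros y [a [Ha ->]]. auto. }
  { exists (RInt h (Rr/2) Rr). exists (Rr/2). split; auto; lra. }
  exists I. apply filterlim_locally. intros e. pose proof (cond_pos e).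
  destruct (classic (exists a0, 0 < a0 < Rr /\ I - e < RInt h a0 Rr)) as [[a0 [Ha0 Ha0']]|Hn].
  - exists (mkposreal a0 (proj1 Ha0)). intros a Ha Ha_pos.
    assert (Ha' : Rabs (a - 0) < a0) by exact Ha. apply Rabs_lt_between in Ha'.
    change (Rabs (RInt h a Rr - I) < e). apply Rabs_lt_between.
    assert (RInt h a Rr <= I) by (apply HI1; exists a; split; [lra|auto]).
    assert (RInt h a0 Rr <= RInt h a Rr) by (apply Hmono; lra). lra.
  - exfalso. assert (I <= I - e); [|lra]. apply HI2.
    intros y [a [Ha ->]]. apply Rnot_lt_le. intros Hlt. apply Hn. exists a; auto.
Qed.

Lemma is_RInt_gen_of_lim (h : R -> R) (Rr I : R) : 0 < Rr ->
  (forall x, 0 < x <= Rr -> continuity_pt h x) ->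
  filterlim (fun a => RInt h a Rr) (at_right 0) (locally I) ->
  is_RInt_gen h (at_right 0) (at_left Rr) I.
Proof.
  intros HR Hc HI.
  set (c := Rr / 2). set (F := fun x => RInt h c x).
  assert (Hder : forall x, 0 < x < Rr -> is_derive F x (h x)).
  { intros x Hx. apply (@is_derive_RInt R_NormedModule h F c x).
    - apply (locally_of_interval 0 Rr); [exact Hx|]. intros y Hy.
      apply (@RInt_correct R_CompleteNormedModule), (ex_RInt_pos h Rr _ _ Hc); unfold c; lra.
    - apply continuity_pt_filterlim, Hc; lra. }
  assert (Hbox : filter_prod (at_right 0) (at_left Rr)
    (fun ab => forall x, Rmin (fst ab) (snd ab) <= x <= Rmax (fst ab) (snd ab) -> 0 < x < Rr)).
  { apply Filter_prod with (fun a => 0 < a < c) (fun b => c < b < Rr);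
      [apply (at_right_of_interval 0 c) | apply (at_left_of_interval c Rr) |]; unfold c; auto; try lra.
    intros a b Ha Hb x Hx. simpl in Hx. rewrite Rmin_left, Rmax_right in Hx by lra. lra. }
  replace I with (RInt h c Rr - (RInt h c Rr - I)) by ring.
  apply (is_RInt_gen_ext (Derive F)).
  { eapply filter_imp; [|exact Hbox]. intros [a b] Hab x Hx.
    apply is_derive_unique, Hder, Hab. simpl in *; lra. }
  apply is_RInt_gen_Derive.
  - eapply filter_imp; [|exact Hbox]. intros ab Hab x Hx. eexists. apply Hder, Hab, Hx.
  - eapply filter_imp; [|exact Hbox]. intros ab Hab x Hx.
    apply (continuous_ext_loc _ h).
    + apply (locally_of_interval 0 Rr); [exact (Hab x Hx)|]. intros y Hy. symmetry. apply is_derive_unique, Hder, Hy.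
    + apply continuity_pt_filterlim, Hc. specialize (Hab x Hx). lra.
  - apply (filterlim_ext_loc (fun a => RInt h c Rr - RInt h a Rr)).
    + apply (at_right_of_interval 0 Rr); [exact HR|]. intros a Ha. unfold F.
      rewrite <- (RInt_Chasles h a c Rr) by (apply (ex_RInt_pos h Rr _ _ Hc); unfold c in *; lra).
      rewrite <- (opp_RInt_swap h c a) by (apply (ex_RInt_pos h Rr _ _ Hc); unfold c in *; lra).
      unfold plus, opp; simpl. ring.
    + apply filterlim_Rminus; [apply filterlim_const | exact HI].
  - apply filterlim_RInt_at_left; unfold c; [lra|]. intros x Hx. apply Hc. lra.
Qed.

Lemma is_RInt_gen_ext_open (h g : R -> R) Rr I : 0 < Rr -> (forall x, 0 < x < Rr -> h x = g x) ->
  is_RInt_gen h (at_right 0) (at_left Rr) I -> is_RInt_gen g (at_right 0) (at_left Rr) I.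
Proof.
  intros HR He. apply (is_RInt_gen_ext h).
  apply Filter_prod with (fun a => 0 < a < Rr) (fun b => 0 < b < Rr);
    [apply (at_right_of_interval 0 Rr) | apply (at_left_of_interval 0 Rr) | ]; auto.
  intros a b Ha Hb x Hx. simpl in Hx. apply He.
  destruct (Rle_dec a b).
  - rewrite Rmin_left, Rmax_right in Hx by lra. lra.
  - rewrite Rmin_right, Rmax_left in Hx by lra. lra.
Qed.

Lemma improper_integral_pair (h1 h2 : R -> R) (c1 c2 Rr B : R) : 0 < Rr -> 0 < c1 -> 0 < c2 ->
  (forall x, 0 < x <= Rr -> continuity_pt h1 x) -> (forall x, 0 < x <= Rr -> continuity_pt h2 x) ->
  (forall x, 0 < x <= Rr -> 0 <= h1 x) -> (forall x, 0 < x <= Rr -> 0 <= h2 x) ->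
  (forall a, 0 < a < Rr -> c1 * RInt h1 a Rr + c2 * RInt h2 a Rr <= B) ->
  exists I1 I2, is_RInt_gen h1 (at_right 0) (at_left Rr) I1 /\
    is_RInt_gen h2 (at_right 0) (at_left Rr) I2 /\ 0 <= I1 /\ 0 <= I2 /\ c1 * I1 + c2 * I2 <= B.
Proof.
  intros HR Hc1 Hc2 Hh1 Hh2 Hp1 Hp2 HB.
  assert (HN : forall h, (forall x, 0 < x <= Rr -> continuity_pt h x) ->
    (forall x, 0 < x <= Rr -> 0 <= h x) -> forall a, 0 < a < Rr -> 0 <= RInt h a Rr).
  { intros h Hc Hp a Ha. apply RInt_ge_0; [lra| apply (ex_RInt_pos h Rr); auto; lra|].
    intros x Hx. apply Hp. lra. }
  destruct (RInt_improper_lim h1 Rr (B / c1) HR Hh1 Hp1) as [I1 HI1].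
  { intros a Ha. apply Rmult_le_reg_l with c1; [lra|].
    replace (c1 * (B / c1)) with B by (field; lra).
    specialize (HB a Ha). assert (0 <= c2 * RInt h2 a Rr) by (apply Rmult_le_pos; [lra|apply HN; auto]). lra. }
  destruct (RInt_improper_lim h2 Rr (B / c2) HR Hh2 Hp2) as [I2 HI2].
  { intros a Ha. apply Rmult_le_reg_l with c2; [lra|].
    replace (c2 * (B / c2)) with B by (field; lra).
    specialize (HB a Ha). assert (0 <= c1 * RInt h1 a Rr) by (apply Rmult_le_pos; [lra|apply HN; auto]). lra. }
  exists I1, I2. split; [apply is_RInt_gen_of_lim; auto|]. split; [apply is_RInt_gen_of_lim; auto|].
  assert (Hev : forall P : R -> Prop, (forall a, 0 < a < Rr -> P a) -> at_right 0 P).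
  { intros P HP. exact (at_right_of_interval 0 Rr P HR HP). }
  assert (Hlim : filterlim (fun a => c1 * RInt h1 a Rr + c2 * RInt h2 a Rr) (at_right 0)
                   (locally (c1 * I1 + c2 * I2))).
  { apply (filterlim_comp_2 (G := locally (c1 * I1)) (H := locally (c2 * I2))
      (fun a => c1 * RInt h1 a Rr) (fun a => c2 * RInt h2 a Rr) Rplus).
    - eapply filterlim_comp; [exact HI1 | apply (filterlim_scal_r (V := R_NormedModule))].
    - eapply filterlim_comp; [exact HI2 | apply (filterlim_scal_r (V := R_NormedModule))].
    - exact (filterlim_plus (V := R_NormedModule) (c1 * I1) (c2 * I2)). }
  pose proof (Proper_StrongProper _ (at_right_proper_filter 0)) as Hprop.
  refine (conj _ (conj _ _)).
  - exact (filterlim_le (fun _ => 0) (fun a => RInt h1 a Rr) 0 I1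
      (Hev _ (HN h1 Hh1 Hp1)) (filterlim_const 0) HI1).
  - exact (filterlim_le (fun _ => 0) (fun a => RInt h2 a Rr) 0 I2
      (Hev _ (HN h2 Hh2 Hp2)) (filterlim_const 0) HI2).
  - exact (filterlim_le _ (fun _ => B) (c1 * I1 + c2 * I2) B (Hev _ HB) Hlim (filterlim_const B)).
Qed.

Lemma improper_integral_bound (h : R -> R) (Rr B : R) : 0 < Rr ->
  (forall x, 0 < x <= Rr -> continuity_pt h x) -> (forall x, 0 < x <= Rr -> 0 <= h x) ->
  (forall a, 0 < a < Rr -> RInt h a Rr <= B) ->
  exists I, is_RInt_gen h (at_right 0) (at_left Rr) I /\ 0 <= I <= B.
Proof.
  intros HR Hc Hp HB.
  destruct (improper_integral_pair h h (1/2) (1/2) Rr B HR) as [I1 [I2 [H1 [H2 [H3 [H4 H5]]]]]];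
    auto; try lra.
  { intros a Ha. specialize (HB a Ha). lra. }
  assert (I1 = I2) by (apply (is_RInt_gen_unique (Fa := at_right 0) (Fb := at_left Rr) h) in H1;
    apply (is_RInt_gen_unique h) in H2; congruence).
  exists I1. split; [auto|lra].
Qed.

Lemma RInt_scal_cont (h : R -> R) c a b : a <= b -> (forall x, a <= x <= b -> continuity_pt h x) ->
  RInt (fun x => c * h x) a b = c * RInt h a b.
Proof.
  intros Hab Hc. apply (@is_RInt_unique R_CompleteNormedModule), (@is_RInt_scal R_NormedModule).
  apply (@RInt_correct R_CompleteNormedModule), ex_RInt_cont; auto.
Qed.

(** * Regular solutions of (P_eps) *)

Notation D1 u := (Derive u).
Notation D2 u := (Derive (Derive u)).
Notation D3 u := (Derive (Derive (Derive u))).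

(* Closed forms of [v_r] and [w_r], valid for [r > 0]. *)
Definition dv_of (n : nat) (u : R -> R) (x : R) : R :=
  D3 u x + (INR n - 1) * (D2 u x / x - D1 u x / x ^ 2).
Definition dw_of (n : nat) (u : R -> R) (x : R) : R :=
  INR (n - 1) * x ^ (n - 1 - 1) * D1 u x + x ^ (n - 1) * D2 u x.

(* By the equation [Q_r = r^(n-1) f], and [Q(0+) = 0], so [Q(r) = int_0^r s^(n-1) f(s) ds]. *)
Definition first_integral (n : nat) (eps : R) (u : R -> R) (x : R) : R :=
  D1 u x ^ n / INR n - eps * (x ^ (n - 1) * dv_of n u x).

#[local] Set Implicit Arguments.

Record regular_solution (n : nat) (Rr eps : R) (f u : R -> R) : Prop := {
  sol_ex_derive_0 : forall x, 0 <= x <= Rr -> ex_derive u x;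
  sol_ex_derive_1 : forall x, 0 <= x <= Rr -> ex_derive (D1 u) x;
  sol_continuous_2 : forall x, 0 <= x <= Rr -> continuity_pt (D2 u) x;
  sol_ex_derive_2 : forall x, 0 < x <= Rr -> ex_derive (D2 u) x;
  sol_continuous_3 : forall x, 0 < x <= Rr -> continuity_pt (D3 u) x;
  sol_ex_derive_3 : forall x, 0 < x < Rr -> ex_derive (D3 u) x;
  sol_ode : forall r, 0 < r < Rr -> Peps_lhs n eps u r = f r;
  sol_du_0 : D1 u 0 = 0;
  sol_lim_0 : filterlim (fun r => r ^ (n - 1) * D3 u r) (at_right 0) (locally 0);
  sol_bc_R : D2 u Rr + (INR n - 1) / Rr * D1 u Rr = eps }.

Record admissible (n : nat) (Rr eps : R) (f u : R -> R) : Prop := {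
  adm_sol :> regular_solution n Rr eps f u;
  adm_mono : mono_incr_on Rr u;
  adm_n : (2 <= n)%nat;
  adm_R : 0 < Rr;
  adm_eps : 0 < eps;
  adm_f : forall r, 0 < r < Rr -> 0 <= f r }.

#[local] Unset Implicit Arguments.

Lemma Ck_near_at k u (P : R -> Prop) x : Ck_near k u P -> P x ->
  (forall j, (j <= k)%nat -> ex_derive_n u j x) /\ continuous (Derive_n u k) x.
Proof.
  intros H Hx. destruct (H x Hx) as [d [Hd H']]. apply H'.
  rewrite Rminus_diag, Rabs_R0; auto.
Qed.

Lemma regular_of_classical n Rr gR eps f u :
  classical_solution n Rr gR eps f u -> regular_solution n Rr eps f u.
Proof.
  intros [H2 [H3 [H4 [Hode [_ [Hp0 [Hlim Hbc]]]]]]].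
  constructor; auto; intros x Hx.
  - exact (proj1 (Ck_near_at 2 u _ x H2 Hx) 1%nat ltac:(lia)).
  - exact (proj1 (Ck_near_at 2 u _ x H2 Hx) 2%nat ltac:(lia)).
  - exact (proj2 (continuity_pt_filterlim _ _) (proj2 (Ck_near_at 2 u _ x H2 Hx))).
  - exact (proj1 (Ck_near_at 3 u _ x H3 Hx) 3%nat ltac:(lia)).
  - exact (proj2 (continuity_pt_filterlim _ _) (proj2 (Ck_near_at 3 u _ x H3 Hx))).
  - exact (proj1 (Ck_near_at 4 u _ x H4 Hx) 4%nat ltac:(lia)).
Qed.

Section RegularSolution.

Context {n : nat} {Rr eps : R} {f u : R -> R} (S : regular_solution n Rr eps f u).

Lemma is_derive_u x : 0 <= x <= Rr -> is_derive u x (D1 u x).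
Proof. intros Hx. apply Derive_correct, (sol_ex_derive_0 S), Hx. Qed.

Lemma is_derive_du x : 0 <= x <= Rr -> is_derive (D1 u) x (D2 u x).
Proof. intros Hx. apply Derive_correct, (sol_ex_derive_1 S), Hx. Qed.

Lemma is_derive_d2u x : 0 < x <= Rr -> is_derive (D2 u) x (D3 u x).
Proof. intros Hx. apply Derive_correct, (sol_ex_derive_2 S), Hx. Qed.

Lemma continuity_du x : 0 <= x <= Rr -> continuity_pt (D1 u) x.
Proof. intros Hx. apply ex_derive_continuity_pt, (sol_ex_derive_1 S), Hx. Qed.

Lemma is_derive_w x : (2 <= n)%nat -> 0 <= x <= Rr -> is_derive (w_of n u) x (dw_of n u x).
Proof.
  intros Hn Hx. unfold w_of, dw_of.
  pose proof (is_derive_pow id (n-1) x 1 (is_derive_id x)) as Hp.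
  pose proof (is_derive_mult (fun r => id r ^ (n-1)) (D1 u) x _ _ Hp (is_derive_du x Hx)
    ltac:(intros; apply Rmult_comm)) as Hm.
  unfold id in Hm. refine (is_derive_eq _ _ _ _ Hm _).
  replace (Init.Nat.pred (n-1)) with (n - 1 - 1)%nat by lia.
  unfold plus, mult; simpl. ring.
Qed.

Lemma is_derive_v x : 0 < x <= Rr -> is_derive (v_of n u) x (dv_of n u x).
Proof.
  intros Hx. unfold v_of, dv_of.
  pose proof (sol_ex_derive_2 S Hx).
  pose proof (sol_ex_derive_1 S (x := x) ltac:(lra)).
  auto_derive. { repeat split; auto; lra. }
  change (D1 (fun y => D2 u y) x) with (D3 u x). change (D1 (fun y => D1 u y) x) with (D2 u x).
  simpl. field. lra.
Qed.

Lemma continuity_v x : 0 < x <= Rr -> continuity_pt (v_of n u) x.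
Proof. intros Hx. apply ex_derive_continuity_pt. eexists. now apply is_derive_v. Qed.

Lemma continuity_w x : 0 <= x <= Rr -> continuity_pt (w_of n u) x.
Proof. intros Hx. unfold w_of. pose proof (continuity_du x Hx). cont_tac. Qed.

Lemma continuity_dv x : 0 < x <= Rr -> continuity_pt (dv_of n u) x.
Proof.
  intros Hx. unfold dv_of.
  pose proof (continuity_du x ltac:(lra)).
  pose proof (sol_continuous_2 S (x := x) ltac:(lra)).
  pose proof (sol_continuous_3 S Hx).
  cont_tac; try apply pow_nonzero; lra.
Qed.

Lemma continuity_dw x : 0 <= x <= Rr -> continuity_pt (dw_of n u) x.
Proof.
  intros Hx. unfold dw_of.
  pose proof (continuity_du x Hx). pose proof (sol_continuous_2 S Hx). cont_tac.
Qed.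

Lemma continuity_first_integral x : (2 <= n)%nat -> 0 < x <= Rr ->
  continuity_pt (first_integral n eps u) x.
Proof.
  intros Hn Hx. unfold first_integral.
  pose proof (continuity_du x ltac:(lra)).
  pose proof (sol_continuous_2 S (x := x) ltac:(lra)). pose proof (sol_continuous_3 S Hx).
  cont_tac; try apply pow_nonzero; try lra. apply not_0_INR. lia.
Qed.

Lemma v_at_R : v_of n u Rr = eps.
Proof. exact (sol_bc_R S). Qed.

End RegularSolution.

Lemma dw_of_eq n u x : (2 <= n)%nat -> 0 < x -> dw_of n u x = x ^ (n - 1) * v_of n u x.
Proof.
  intros Hn Hx. unfold dw_of, v_of.
  destruct n as [|[|k]]; try lia. simpl (S (S k) - 1)%nat. simpl (S k - 1)%nat.
  rewrite Nat.sub_0_r, (S_INR (S k)). simpl pow. field. lra.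
Qed.

Lemma scaled_dv_eq n eps u x :
  eps * (x ^ (n - 1) * dv_of n u x) = D1 u x ^ n / INR n - first_integral n eps u x.
Proof. unfold first_integral. ring. Qed.

(** * The first integral *)

Lemma at_right_0_eps (g : R -> R) : filterlim g (at_right 0) (locally 0) ->
  forall e, 0 < e -> exists d, 0 < d /\ forall a, 0 < a < d -> Rabs (g a) < e.
Proof.
  intros H e He. destruct (proj1 (filterlim_locally _ _) H (mkposreal e He)) as [d Hd].
  exists d; split; [apply cond_pos|]. intros a Ha.
  assert (Hb : Rabs (a - 0) < d) by (rewrite Rminus_0_r, Rabs_pos_eq; lra).
  specialize (Hd a Hb (proj1 Ha)).
  assert (Hd' : Rabs (g a - 0) < e) by exact Hd. rewrite Rminus_0_r in Hd'. exact Hd'.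
Qed.

Lemma first_integral_split n eps u a xi : (2 <= n)%nat -> 0 < a -> D1 u a = D2 u xi * a ->
  first_integral n eps u a = D1 u a ^ n / INR n - eps * (a ^ (n - 1) * D3 u a)
    - eps * (INR n - 1) * a ^ (n - 2) * (D2 u a - D2 u xi).
Proof.
  intros Hn Ha Hxi. unfold first_integral, dv_of.
  replace (D1 u a / a ^ 2) with (D2 u xi / a) by (rewrite Hxi; field; lra).
  destruct n as [|[|k]]; try lia. simpl (S (S k) - 1)%nat. simpl (S (S k) - 2)%nat.
  rewrite Nat.sub_0_r. simpl pow. field. split; [apply not_0_INR; lia | lra].
Qed.

Section FirstIntegral.

Context {n : nat} {Rr eps : R} {f u : R -> R} (S : regular_solution n Rr eps f u).

Lemma is_derive_first_integral r : (2 <= n)%nat -> 0 < r < Rr ->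
  is_derive (first_integral n eps u) r (r ^ (n - 1) * f r).
Proof.
  intros Hn Hr.
  pose proof (sol_ode S Hr) as Hode. unfold Peps_lhs in Hode.
  assert (Hv : forall y, 0 < y < Rr ->
     / y ^ (n - 1) * Derive (fun x => x ^ (n - 1) * Derive u x) y = v_of n u y).
  { intros y Hy. change (Derive (fun x => x ^ (n - 1) * Derive u x) y) with (Derive (w_of n u) y).
    rewrite (is_derive_unique _ _ _ (is_derive_w S y Hn ltac:(lra))).
    rewrite dw_of_eq by (auto; lra). field. apply pow_nonzero; lra. }
  assert (Hdv : forall y, 0 < y < Rr ->
     Derive (fun t => / t ^ (n - 1) * Derive (fun x => x ^ (n - 1) * Derive u x) t) y = dv_of n u y).
  { intros y Hy. rewrite (Derive_ext_loc _ (v_of n u)).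
    - apply is_derive_unique, (is_derive_v S). lra.
    - apply (locally_of_interval 0 Rr); [exact Hy|]. intros z Hz. apply Hv, Hz. }
  assert (Hex : ex_derive (dv_of n u) r).
  { unfold dv_of.
    pose proof (sol_ex_derive_3 S Hr). pose proof (sol_ex_derive_2 S (x := r) ltac:(lra)).
    pose proof (sol_ex_derive_1 S (x := r) ltac:(lra)).
    auto_derive. repeat split; auto; try lra; nra. }
  assert (HD : Derive (fun s => s ^ (n - 1) * Derive (fun t => / t ^ (n - 1) *
        Derive (fun x => x ^ (n - 1) * Derive u x) t) s) r
        = INR (n - 1) * r ^ Init.Nat.pred (n - 1) * dv_of n u r + r ^ (n - 1) * Derive (dv_of n u) r).
  { rewrite (Derive_ext_loc _ (fun s => s ^ (n - 1) * dv_of n u s)).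
    - apply is_derive_unique. auto_derive; auto. change (D1 (fun x => dv_of n u x) r) with (Derive (dv_of n u) r). simpl. ring.
    - apply (locally_of_interval 0 Rr); [exact Hr|]. intros z Hz. simpl. rewrite Hdv; auto. }
  rewrite HD in Hode.
  assert (Hp : Derive (fun s => Derive u s ^ n) r = INR n * D2 u r * D1 u r ^ Init.Nat.pred n)
    by (apply is_derive_unique, is_derive_pow, (is_derive_du S); lra).
  rewrite Hp in Hode.
  pose proof (sol_ex_derive_1 S (x := r) ltac:(lra)).
  unfold first_integral. auto_derive. { repeat split; auto. }
  rewrite <- Hode.
  change (D1 (fun x => D1 u x) r) with (D2 u r).
  change (D1 (fun x => dv_of n u x) r) with (Derive (dv_of n u) r).
  assert (INR n <> 0) by (apply not_0_INR; lia).
  assert (r ^ (n - 1) <> 0) by (apply pow_nonzero; lra).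
  simpl. field. auto.
Qed.

Lemma first_integral_lim_0 : (2 <= n)%nat -> 0 < Rr -> 0 <= eps ->
  filterlim (first_integral n eps u) (at_right 0) (locally 0).
Proof.
  intros Hn HR He. apply filterlim_locally. intros [e Hep].
  set (K := eps * (INR n - 1) + 1).
  assert (HnR : 1 <= INR n - 1) by (assert (2 <= INR n) by (apply (le_INR 2); lia); lra).
  assert (HK : 0 < K) by (unfold K; nra).
  destruct (continuity_pt_eps (D1 u) 0 (continuity_du S 0 ltac:(lra)) (Rmin 1 (e/3)))
    as [d1 [Hd1 Hd1']]; [apply Rmin_glb_lt; lra|].
  destruct (continuity_pt_eps (D2 u) 0 (sol_continuous_2 S (x := 0) ltac:(lra)) (e / (6 * K)))
    as [d2 [Hd2 Hd2']]; [apply Rdiv_lt_0_compat; lra|].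
  destruct (at_right_0_eps _ (sol_lim_0 S) (e / (3 * eps + 3))) as [d3 [Hd3 Hd3']];
    [apply Rdiv_lt_0_compat; lra|].
  set (d := Rmin (Rmin d1 d2) (Rmin d3 (Rmin 1 Rr))).
  assert (Hdd : d <= d1 /\ d <= d2 /\ d <= d3 /\ d <= 1 /\ d <= Rr).
  { unfold d. pose proof (Rmin_l (Rmin d1 d2) (Rmin d3 (Rmin 1 Rr))).
    pose proof (Rmin_r (Rmin d1 d2) (Rmin d3 (Rmin 1 Rr))).
    pose proof (Rmin_l d1 d2). pose proof (Rmin_r d1 d2). pose proof (Rmin_l d3 (Rmin 1 Rr)).
    pose proof (Rmin_r d3 (Rmin 1 Rr)). pose proof (Rmin_l 1 Rr). pose proof (Rmin_r 1 Rr). lra. }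
  exists (mkposreal d ltac:(unfold d; repeat apply Rmin_glb_lt; lra)).
  intros a Ha Ha0. assert (Ha' : Rabs (a - 0) < d) by exact Ha.
  rewrite Rminus_0_r, Rabs_pos_eq in Ha' by lra.
  change (Rabs (first_integral n eps u a - 0) < e). rewrite Rminus_0_r.
  destruct (MVT_cor2 (D1 u) (D2 u) 0 a) as [xi [Hxi1 Hxi2]]; [lra| |].
  { intros c Hc. apply is_derive_Reals, (is_derive_du S). lra. }
  rewrite (sol_du_0 S) in Hd1', Hxi1.
  rewrite (first_integral_split n eps u a xi Hn Ha0) by lra.
  assert (Hq1 : Rabs (D2 u a - D2 u 0) < e / (6 * K)) by (apply Hd2'; rewrite Rminus_0_r, Rabs_pos_eq; lra).
  assert (Hq2 : Rabs (D2 u xi - D2 u 0) < e / (6 * K)) by (apply Hd2'; rewrite Rminus_0_r, Rabs_pos_eq; lra).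
  assert (Hp1 : Rabs (D1 u a - 0) < Rmin 1 (e / 3)) by (apply Hd1'; rewrite Rminus_0_r, Rabs_pos_eq; lra).
  rewrite Rminus_0_r in Hp1.
  assert (Hm1 : Rmin 1 (e/3) <= 1) by apply Rmin_l. assert (Hm2 : Rmin 1 (e/3) <= e/3) by apply Rmin_r.
  assert (Ht : Rabs (a ^ (n - 1) * D3 u a) < e / (3 * eps + 3)) by (apply Hd3'; lra).
  assert (T1 : Rabs (D1 u a ^ n / INR n) < e / 3).
  { unfold Rdiv. rewrite Rabs_mult, (Rabs_pos_eq (/ INR n)) by (left; apply Rinv_0_lt_compat; lra).
    assert (Rabs (D1 u a ^ n) <= Rabs (D1 u a)) by (apply pow_abs_le_abs; lra || lia).
    assert (/ INR n <= 1) by (rewrite <- Rinv_1; apply Rinv_le_contravar; lra).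
    pose proof (Rabs_pos (D1 u a ^ n)). nra. }
  assert (T2 : Rabs (eps * (a ^ (n - 1) * D3 u a)) < e / 3).
  { rewrite Rabs_mult, Rabs_pos_eq by lra.
    apply Rle_lt_trans with (eps * (e / (3 * eps + 3))); [apply Rmult_le_compat_l; lra|].
    apply Rmult_lt_reg_r with (3 * eps + 3); [lra|].
    replace (eps * (e / (3 * eps + 3)) * (3 * eps + 3)) with (eps * e) by (field; lra). nra. }
  assert (T3 : Rabs (eps * (INR n - 1) * a ^ (n - 2) * (D2 u a - D2 u xi)) < e / 3).
  { rewrite !Rabs_mult, (Rabs_pos_eq eps), (Rabs_pos_eq (INR n - 1)) by lra.
    assert (Hapow : Rabs (a ^ (n - 2)) <= 1).
    { rewrite Rabs_pos_eq by (apply pow_le; lra). apply pow_le_one; lra. }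
    assert (Hdq : Rabs (D2 u a - D2 u xi) < e / (3 * K)).
    { replace (D2 u a - D2 u xi) with ((D2 u a - D2 u 0) - (D2 u xi - D2 u 0)) by ring.
      eapply Rle_lt_trans; [apply Rabs_triang|]. rewrite Rabs_Ropp.
      replace (e / (3 * K)) with (e / (6 * K) + e / (6 * K)) by (field; lra). lra. }
    pose proof (Rabs_pos (a ^ (n - 2))). pose proof (Rabs_pos (D2 u a - D2 u xi)).
    assert (0 <= eps * (INR n - 1)) by nra.
    apply Rle_lt_trans with (eps * (INR n - 1) * 1 * Rabs (D2 u a - D2 u xi)).
    { apply Rmult_le_compat_r; auto. apply Rmult_le_compat_l; auto. }
    apply Rle_lt_trans with (K * Rabs (D2 u a - D2 u xi)); [unfold K; nra|].
    replace (e / 3) with (K * (e / (3 * K))) by (field; lra).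
    apply Rmult_lt_compat_l; lra. }
  eapply Rle_lt_trans; [apply Rabs_triang|]. rewrite Rabs_Ropp.
  eapply Rle_lt_trans; [apply Rplus_le_compat_r; apply Rabs_triang|]. rewrite Rabs_Ropp.
  lra.
Qed.

End FirstIntegral.

Lemma first_integral_indep {n Rr e1 e2 f u1 u2}
  (S1 : regular_solution n Rr e1 f u1) (S2 : regular_solution n Rr e2 f u2) :
  (2 <= n)%nat -> 0 < Rr -> 0 <= e1 -> 0 <= e2 ->
  forall r, 0 < r <= Rr -> first_integral n e1 u1 r = first_integral n e2 u2 r.
Proof.
  intros Hn HR He1 He2 r Hr.
  set (g := fun x => first_integral n e1 u1 x - first_integral n e2 u2 x).
  assert (Hconst : forall a, 0 < a < r -> g a = g r).
  { intros a Ha.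
    destruct (mean_value_is_derive g (fun _ => 0) a r) as [c [_ Hc]]; [lra| | |lra].
    - intros c Hc.
      pose proof (is_derive_minus _ _ _ _ _ (is_derive_first_integral S1 c Hn ltac:(lra))
        (is_derive_first_integral S2 c Hn ltac:(lra))) as Hd.
      refine (is_derive_eq _ _ _ _ Hd _). unfold minus, plus, opp; simpl. ring.
    - intros c Hc. apply cpt_minus; [apply (continuity_first_integral S1) | apply (continuity_first_integral S2)];
        auto; lra. }
  assert (Hlim0 : filterlim g (at_right 0) (locally 0)).
  { pose proof (filterlim_Rminus _ _ 0 0 (first_integral_lim_0 S1 Hn HR He1)
      (first_integral_lim_0 S2 Hn HR He2)) as Hd.
    rewrite Rminus_0_r in Hd. exact Hd. }
  assert (Hsmall : forall e, 0 < e -> Rabs (g r) < e).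
  { intros e He. destruct (at_right_0_eps g Hlim0 e He) as [d [Hd Hg]].
    set (a := Rmin d r / 2).
    assert (0 < Rmin d r) by (apply Rmin_glb_lt; lra).
    assert (Rmin d r <= d) by apply Rmin_l. assert (Rmin d r <= r) by apply Rmin_r.
    rewrite <- (Hconst a) by (unfold a; lra). apply Hg. unfold a; lra. }
  assert (Hz : g r = 0).
  { destruct (Req_dec (g r) 0) as [|Hne]; auto.
    specialize (Hsmall (Rabs (g r)) (Rabs_pos_lt _ Hne)). lra. }
  unfold g in Hz. lra.
Qed.

Section Admissible.

Context {n : nat} {Rr eps : R} {f u : R -> R} (A : admissible n Rr eps f u).

Local Notation Q := (first_integral n eps u).

Lemma INR_n_ge_2 : 2 <= INR n.
Proof. apply (le_INR 2), (adm_n A). Qed.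

Lemma first_integral_mono a b : 0 < a -> a <= b -> b <= Rr -> Q a <= Q b.
Proof.
  intros Ha Hab Hb.
  apply (le_of_is_derive_nonneg _ (fun x => x ^ (n - 1) * f x) a b); auto.
  - intros c Hc. apply (is_derive_first_integral A c (adm_n A)). lra.
  - intros c Hc. apply Rmult_le_pos; [apply pow_le; lra | apply (adm_f A); lra].
  - intros c Hc. apply (continuity_first_integral A c (adm_n A)). lra.
Qed.

Lemma first_integral_nonneg r : 0 < r <= Rr -> 0 <= Q r.
Proof.
  intros Hr.
  apply (@filterlim_le _ _ (Proper_StrongProper _ (at_right_proper_filter 0)) Q (fun _ => Q r) 0 (Q r)).
  - apply (at_right_of_interval 0 r); [lra|]. intros a Ha. apply first_integral_mono; lra.
  - apply (first_integral_lim_0 A (adm_n A) (adm_R A)). pose proof (adm_eps A). lra.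
  - apply filterlim_const.
Qed.

Lemma du_nonneg x : 0 <= x <= Rr -> 0 <= D1 u x.
Proof.
  intros Hx. destruct (Req_dec x 0) as [->|Hx0].
  - rewrite (sol_du_0 A). lra.
  - apply (is_derive_nonneg_left u x (D1 u x) x (is_derive_u A x Hx)); [lra|].
    intros h Hh. apply (adm_mono A); lra.
Qed.

Lemma d2u_0_nonneg : 0 <= D2 u 0.
Proof.
  pose proof (adm_R A).
  apply (is_derive_nonneg_right (D1 u) 0 (D2 u 0) Rr (is_derive_du A 0 ltac:(lra))); [lra|].
  intros h Hh. rewrite (sol_du_0 A), Rplus_0_l. apply du_nonneg. lra.
Qed.

(* Comparison step of the minimum principle for [v]: where [v] is negative to the right of a
   critical point, [w = r^(n-1) u_r] decreases, so [u_r^n / n - Q] decreases and [v_r < 0]. *)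
Lemma dv_neg_right_of_critical r2 d : 0 < r2 -> 0 < d -> r2 + d <= Rr -> dv_of n u r2 = 0 ->
  (forall y, r2 <= y < r2 + d -> v_of n u y < 0) -> forall s, r2 < s < r2 + d -> dv_of n u s < 0.
Proof.
  intros Hr2 Hd HdR HV0 Hvneg s Hs.
  pose proof (adm_eps A) as He. pose proof INR_n_ge_2 as HnR.
  destruct (mean_value_is_derive (w_of n u) (dw_of n u) r2 s) as [xi [Hxi1 Hxi2]]; [lra| | |].
  - intros y Hy. apply (is_derive_w A y (adm_n A)). lra.
  - intros y Hy. apply (continuity_w A). lra.
  - rewrite dw_of_eq in Hxi2 by (apply (adm_n A) || lra). unfold w_of in Hxi2.
    assert (Hvxi : v_of n u xi < 0) by (apply Hvneg; lra).
    assert (xi ^ (n - 1) * v_of n u xi * (s - r2) < 0).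
    { assert (0 < xi ^ (n - 1)) by (apply pow_lt; lra).
      assert (xi ^ (n - 1) * v_of n u xi < 0) by nra. nra. }
    assert (Hpr2 : 0 <= D1 u r2) by (apply du_nonneg; lra).
    assert (Hps : 0 <= D1 u s) by (apply du_nonneg; lra).
    assert (Hpow : r2 ^ (n - 1) <= s ^ (n - 1)) by (apply pow_incr; lra).
    assert (Hspos : 0 < s ^ (n - 1)) by (apply pow_lt; lra).
    assert (Hlt : D1 u s < D1 u r2).
    { apply Rnot_le_lt. intros Hle.
      assert (r2 ^ (n - 1) * D1 u r2 <= s ^ (n - 1) * D1 u s); [|lra].
      apply Rle_trans with (s ^ (n - 1) * D1 u r2); [apply Rmult_le_compat_r|apply Rmult_le_compat_l]; lra. }
    assert (Hpn : D1 u s ^ n < D1 u r2 ^ n) by (apply pow_lt_compat_nonneg; [lra|pose proof (adm_n A); lia]).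
    assert (HQ : Q r2 <= Q s) by (apply first_integral_mono; lra).
    pose proof (scaled_dv_eq n eps u s) as E1. pose proof (scaled_dv_eq n eps u r2) as E2.
    rewrite HV0, !Rmult_0_r in E2.
    assert (D1 u s ^ n / INR n < D1 u r2 ^ n / INR n)
      by (apply Rmult_lt_compat_r; [apply Rinv_0_lt_compat|]; lra).
    assert (s ^ (n - 1) * dv_of n u s < 0) by nra. nra.
Qed.

Lemma v_nonneg x0 : 0 < x0 <= Rr -> 0 <= v_of n u x0.
Proof.
  intros Hx0. pose proof (adm_R A) as HR. pose proof INR_n_ge_2 as HnR.
  apply Rnot_lt_le. intros Hneg.
  assert (Hv : forall x, 0 < x <= Rr -> D2 u x <= v_of n u x).
  { intros x Hx. unfold v_of. assert (0 <= (INR n - 1) / x * D1 u x); [|lra].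
    apply Rmult_le_pos; [apply Rdiv_le_0_compat; lra|apply du_nonneg; lra]. }
  pose proof d2u_0_nonneg as Hq0.
  destruct (continuity_pt_eps (D2 u) 0 (sol_continuous_2 A (x := 0) ltac:(lra)) (- v_of n u x0))
    as [d [Hd Hd']]; [lra|].
  set (c := Rmin d x0 / 2).
  assert (Hc : 0 < c < x0 /\ c < d).
  { unfold c. pose proof (Rmin_l d x0). pose proof (Rmin_r d x0).
    assert (0 < Rmin d x0) by (apply Rmin_glb_lt; lra). lra. }
  assert (Hqc : v_of n u x0 < v_of n u c).
  { specialize (Hd' c ltac:(rewrite Rminus_0_r, Rabs_pos_eq; lra)). apply Rabs_lt_between in Hd'.
    specialize (Hv c ltac:(lra)). lra. }
  destruct (continuity_ab_min (v_of n u) c Rr) as [r2 [Hr2 Hr2']]; [lra| |].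
  { intros y Hy. apply (continuity_v A). lra. }
  assert (Hvr2 : v_of n u r2 <= v_of n u x0) by (apply Hr2; lra).
  assert (Hr2c : r2 <> c) by (intros ->; lra).
  assert (Hr2R : r2 <> Rr) by (intros ->; rewrite (v_at_R A) in Hvr2; pose proof (adm_eps A); lra).
  assert (HV0 : dv_of n u r2 = 0).
  { apply (is_derive_local_min (v_of n u) r2 (dv_of n u r2) (Rmin (r2 - c) (Rr - r2))).
    - apply (is_derive_v A). lra.
    - apply Rmin_glb_lt; lra.
    - intros y Hy. apply Hr2. pose proof (Rmin_l (r2 - c) (Rr - r2)). pose proof (Rmin_r (r2 - c) (Rr - r2)).
      apply Rabs_lt_between in Hy. lra. }
  destruct (continuity_pt_eps (v_of n u) r2 (continuity_v A r2 ltac:(lra)) (- v_of n u r2))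
    as [d2 [Hd2 Hd2']]; [lra|].
  set (dl := Rmin d2 (Rr - r2)).
  assert (Hdl : 0 < dl /\ dl <= d2 /\ dl <= Rr - r2).
  { unfold dl. pose proof (Rmin_l d2 (Rr - r2)). pose proof (Rmin_r d2 (Rr - r2)).
    assert (0 < Rmin d2 (Rr - r2)) by (apply Rmin_glb_lt; lra). lra. }
  assert (Hvneg : forall y, r2 <= y < r2 + dl -> v_of n u y < 0).
  { intros y Hy. specialize (Hd2' y ltac:(rewrite Rabs_pos_eq; lra)). apply Rabs_lt_between in Hd2'. lra. }
  set (s := r2 + dl / 2).
  destruct (mean_value_is_derive (v_of n u) (dv_of n u) r2 s) as [xi [Hxi1 Hxi2]]; [unfold s; lra| | |].
  - intros y Hy. apply (is_derive_v A). unfold s in *; lra.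
  - intros y Hy. apply (continuity_v A). unfold s in *; lra.
  - assert (dv_of n u xi < 0) by (apply (dv_neg_right_of_critical r2 dl); auto; unfold s in *; lra).
    assert (v_of n u r2 <= v_of n u s) by (apply Hr2; unfold s in *; lra).
    assert (dv_of n u xi * (s - r2) < 0) by (apply Rmult_neg_pos; [lra| unfold s; lra]).
    lra.
Qed.

Lemma du_le_at_R_of_max : (forall h, 0 < h < Rr -> D1 u (Rr - h) <= D1 u Rr) -> D1 u Rr <= eps * Rr.
Proof.
  intros Hmax. pose proof (adm_R A) as HR. pose proof INR_n_ge_2 as HnR.
  assert (Hq : 0 <= D2 u Rr)
    by (apply (is_derive_nonneg_left (D1 u) Rr (D2 u Rr) Rr (is_derive_du A Rr ltac:(lra))); auto).
  pose proof (v_at_R A) as HvR. unfold v_of in HvR.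
  assert (Hp : 0 <= D1 u Rr) by (apply du_nonneg; lra).
  assert (D1 u Rr / Rr <= eps); [|apply Rmult_le_reg_r with (/ Rr); [apply Rinv_0_lt_compat; lra|];
    replace (eps * Rr * / Rr) with eps by (field; lra); exact H].
  assert (D1 u Rr / Rr <= (INR n - 1) / Rr * D1 u Rr); [|lra].
  replace ((INR n - 1) / Rr * D1 u Rr) with ((INR n - 1) * (D1 u Rr / Rr)) by (field; lra).
  assert (0 <= D1 u Rr / Rr) by (apply Rdiv_le_0_compat; lra). nra.
Qed.

(* At an interior maximum of [u_r] we have [u_rr = 0]; if [u_r^n / n > Q] there, then [v_r > 0]
   forces [u_rrr > 0], and [u_r] would keep increasing. *)
Lemma du_max_interior rs : 0 < rs < Rr -> (forall y, 0 <= y <= Rr -> D1 u y <= D1 u rs) ->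
  D1 u rs ^ n / INR n <= Q rs.
Proof.
  intros Hrs Hmax. pose proof (adm_eps A) as He. pose proof INR_n_ge_2 as HnR.
  apply Rnot_lt_le. intros HQ.
  pose proof (scaled_dv_eq n eps u rs) as E.
  assert (HVpos : 0 < dv_of n u rs).
  { assert (0 < rs ^ (n - 1)) by (apply pow_lt; lra).
    assert (0 < rs ^ (n - 1) * dv_of n u rs) by nra. nra. }
  assert (Hq0 : D2 u rs = 0).
  { apply (is_derive_local_max (D1 u) rs (D2 u rs) (Rmin rs (Rr - rs)) (is_derive_du A rs ltac:(lra))).
    - apply Rmin_glb_lt; lra.
    - intros y Hy. apply Hmax. pose proof (Rmin_l rs (Rr - rs)). pose proof (Rmin_r rs (Rr - rs)).
      apply Rabs_lt_between in Hy. lra. }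
  assert (Ht : 0 < D3 u rs).
  { unfold dv_of in HVpos. rewrite Hq0 in HVpos.
    assert (0 <= (INR n - 1) * (D1 u rs / rs ^ 2)).
    { apply Rmult_le_pos; [lra|]. apply Rdiv_le_0_compat; [apply du_nonneg; lra|]. apply pow_lt; lra. }
    replace (0 / rs - D1 u rs / rs ^ 2) with (- (D1 u rs / rs ^ 2)) in HVpos by (field; lra).
    nra. }
  destruct (is_derive_pos_right (D2 u) rs (D3 u rs) (is_derive_d2u A rs ltac:(lra)) Ht Hq0)
    as [d [Hd Hd']].
  set (h := Rmin d (Rr - rs) / 2).
  assert (Hh : 0 < h /\ h < d /\ rs + h < Rr).
  { unfold h. pose proof (Rmin_l d (Rr - rs)). pose proof (Rmin_r d (Rr - rs)).
    assert (0 < Rmin d (Rr - rs)) by (apply Rmin_glb_lt; lra). lra. }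
  destruct (mean_value_is_derive (D1 u) (D2 u) rs (rs + h)) as [xi [Hxi1 Hxi2]]; [lra| | |].
  - intros y Hy. apply (is_derive_du A). lra.
  - intros y Hy. apply (continuity_du A). lra.
  - assert (0 < D2 u xi) by (replace xi with (rs + (xi - rs)) by ring; apply Hd'; lra).
    assert (D1 u (rs + h) <= D1 u rs) by (apply Hmax; lra).
    assert (0 < D2 u xi * (rs + h - rs)) by (apply Rmult_lt_0_compat; lra).
    lra.
Qed.

Lemma du_le x : 0 <= x <= Rr -> D1 u x <= 1 + INR n * Q Rr + eps * Rr.
Proof.
  intros Hx. pose proof (adm_R A) as HR. pose proof (adm_eps A) as He. pose proof INR_n_ge_2.
  assert (HQR : 0 <= INR n * Q Rr) by (apply Rmult_le_pos; [lra|apply first_integral_nonneg; lra]).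
  destruct (continuity_ab_maj (D1 u) 0 Rr) as [rs [Hrs Hrs']]; [lra| |].
  { intros c Hc. apply (continuity_du A c Hc). }
  apply Rle_trans with (D1 u rs); [apply Hrs; auto|].
  destruct (Req_dec rs 0) as [->|H0]; [rewrite (sol_du_0 A); nra|].
  destruct (Req_dec rs Rr) as [->|H1].
  { assert (D1 u Rr <= eps * Rr) by (apply du_le_at_R_of_max; intros; apply Hrs; lra). lra. }
  destruct (Rle_or_lt (D1 u rs) 1) as [Hle|Hgt]; [nra|].
  assert (D1 u rs <= D1 u rs ^ n) by (apply pow_ge_self; [lra|pose proof (adm_n A); lia]).
  assert (D1 u rs ^ n / INR n <= Q rs) by (apply du_max_interior; auto; lra).
  assert (Q rs <= Q Rr) by (apply first_integral_mono; lra).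
  assert (D1 u rs ^ n <= INR n * Q Rr).
  { apply Rmult_le_reg_r with (/ INR n); [apply Rinv_0_lt_compat; lra|].
    replace (INR n * Q Rr * / INR n) with (Q Rr) by (field; lra). unfold Rdiv in *. lra. }
  nra.
Qed.

Lemma dv_lower s : 0 < s <= Rr -> - Q Rr / (eps * s ^ (n - 1)) <= dv_of n u s.
Proof.
  intros Hs. pose proof (adm_eps A) as He.
  pose proof (scaled_dv_eq n eps u s) as E.
  assert (HQ : Q s <= Q Rr) by (apply first_integral_mono; lra).
  assert (Hp : 0 <= D1 u s ^ n / INR n).
  { apply Rdiv_le_0_compat; [apply pow_le, du_nonneg; lra|]. pose proof INR_n_ge_2; lra. }
  assert (Hsp : 0 < eps * s ^ (n - 1)) by (apply Rmult_lt_0_compat; auto; apply pow_lt; lra).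
  apply Rmult_le_reg_r with (eps * s ^ (n - 1)); auto.
  unfold Rdiv. rewrite Rmult_assoc, Rinv_l, Rmult_1_r by lra. nra.
Qed.

Lemma dv_abs_le Pb : (forall x, 0 <= x <= Rr -> D1 u x <= Pb) ->
  forall s, 0 < s <= Rr -> Rabs (dv_of n u s) <= (Pb ^ n + Q Rr) / (eps * s ^ (n - 1)).
Proof.
  intros HPb s Hs. pose proof (adm_eps A) as He. pose proof INR_n_ge_2.
  pose proof (scaled_dv_eq n eps u s) as E.
  assert (HQ : Q s <= Q Rr) by (apply first_integral_mono; lra).
  assert (HQ0 : 0 <= Q s) by (apply first_integral_nonneg; lra).
  assert (Hp0 : 0 <= D1 u s) by (apply du_nonneg; lra).
  assert (Hpn : D1 u s ^ n <= Pb ^ n) by (apply pow_incr; split; auto; apply HPb; lra).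
  assert (Hp : 0 <= D1 u s ^ n / INR n <= D1 u s ^ n).
  { assert (0 <= D1 u s ^ n) by (apply pow_le; auto). split; [apply Rdiv_le_0_compat; lra|].
    unfold Rdiv. assert (/ INR n <= 1) by (rewrite <- Rinv_1; apply Rinv_le_contravar; lra). nra. }
  assert (Hsp : 0 < eps * s ^ (n - 1)) by (apply Rmult_lt_0_compat; auto; apply pow_lt; lra).
  replace (dv_of n u s) with ((D1 u s ^ n / INR n - Q s) / (eps * s ^ (n - 1)))
    by (rewrite <- E; field; split; [apply pow_nonzero; lra| lra]).
  unfold Rdiv at 1. rewrite Rabs_mult, (Rabs_pos_eq (/ _)) by (left; apply Rinv_0_lt_compat; auto).
  apply Rmult_le_compat_r; [left; apply Rinv_0_lt_compat; auto|].
  apply Rabs_le. lra.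
Qed.

Lemma v_upper x : 0 < x <= Rr -> v_of n u x <= eps + Q Rr * (Rr - x) / (eps * x ^ (n - 1)).
Proof.
  intros Hx. pose proof (adm_eps A) as He.
  set (M := Q Rr).
  assert (Hxp : 0 < eps * x ^ (n - 1)) by (apply Rmult_lt_0_compat; auto; apply pow_lt; lra).
  assert (HM : 0 <= M) by (apply first_integral_nonneg; lra).
  set (k := M / (eps * x ^ (n - 1))).
  assert (Hk : 0 <= k) by (apply Rdiv_le_0_compat; lra).
  assert (Hinc : v_of n u x + k * x <= v_of n u Rr + k * Rr).
  { apply (le_of_is_derive_nonneg (fun s => v_of n u s + k * s) (fun s => dv_of n u s + k) x Rr); [lra| | |].
    - intros c Hc.
      pose proof (is_derive_plus _ _ _ _ _ (is_derive_v A c ltac:(lra))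
        (is_derive_scal (fun s => s) c k 1 (is_derive_id c))) as Hd.
      refine (is_derive_eq _ _ _ _ Hd _). unfold plus, scal; simpl; unfold mult; simpl. ring.
    - intros c Hc. pose proof (dv_lower c ltac:(lra)) as HV. fold M in HV.
      assert (M / (eps * c ^ (n - 1)) <= k).
      { unfold k, Rdiv. apply Rmult_le_compat_l; auto.
        apply Rinv_le_contravar; [apply Rmult_lt_0_compat; auto; apply pow_lt; lra|].
        apply Rmult_le_compat_l; [lra|]. apply pow_incr; lra. }
      unfold Rdiv in HV. rewrite Ropp_mult_distr_l_reverse in HV. unfold Rdiv in H. lra.
    - intros c Hc. apply cpt_plus; [apply (continuity_v A); lra|].
      apply cpt_mult; [apply cpt_const|apply cpt_id]. }
  rewrite (v_at_R A) in Hinc.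
  replace (M * (Rr - x) / (eps * x ^ (n - 1))) with (k * (Rr - x))
    by (assert (x ^ (n - 1) <> 0) by (apply pow_nonzero; lra); unfold k; field; split; auto; lra).
  lra.
Qed.

End Admissible.

Ltac admissible_facts A :=
  pose proof (adm_n A) as Hn; pose proof (adm_R A) as HR; pose proof (adm_eps A) as He;
  pose proof (INR_n_ge_2 A) as HnR.

Lemma dv_mul_w_lower {n Rr eps f u} (A : admissible n Rr eps f u) Pb :
  (forall x, 0 <= x <= Rr -> D1 u x <= Pb) -> forall x, 0 < x <= Rr ->
  - (first_integral n eps u Rr * Pb / eps) <= dv_of n u x * w_of n u x.
Proof.
  intros HPb x Hx. admissible_facts A.
  set (M := first_integral n eps u Rr).
  pose proof (scaled_dv_eq n eps u x) as E.
  assert (HQx : first_integral n eps u x <= M) by (apply (first_integral_mono A); lra).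
  assert (HQ0 : 0 <= first_integral n eps u x) by (apply (first_integral_nonneg A); lra).
  assert (Hp0 : 0 <= D1 u x) by (apply (du_nonneg A); lra).
  assert (Hpb : D1 u x <= Pb) by (apply HPb; lra).
  unfold w_of.
  assert (Hk : dv_of n u x * (x ^ (n - 1) * D1 u x)
               = (D1 u x ^ n / INR n - first_integral n eps u x) * D1 u x / eps)
    by (rewrite <- E; field; lra).
  rewrite Hk. unfold Rdiv.
  assert (0 <= D1 u x ^ n * / INR n)
    by (apply Rmult_le_pos; [apply pow_le; auto| left; apply Rinv_0_lt_compat; lra]).
  assert (first_integral n eps u x * D1 u x <= M * Pb) by (apply Rmult_le_compat; auto).
  assert (0 < / eps) by (apply Rinv_0_lt_compat; auto).
  assert (0 <= D1 u x ^ n * / INR n * D1 u x * / eps) by (apply Rmult_le_pos; [apply Rmult_le_pos|]; lra).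
  assert (first_integral n eps u x * D1 u x * / eps <= M * Pb * / eps) by (apply Rmult_le_compat_r; lra).
  replace ((D1 u x ^ n * / INR n - first_integral n eps u x) * D1 u x * / eps) with
    (D1 u x ^ n * / INR n * D1 u x * / eps - first_integral n eps u x * D1 u x * / eps) by ring.
  lra.
Qed.

Lemma RInt_weighted_v_sq_le {n Rr eps f u} (A : admissible n Rr eps f u) Pb :
  (forall x, 0 <= x <= Rr -> D1 u x <= Pb) -> forall a, 0 < a < Rr ->
  RInt (fun x => x ^ (2 * (n - 1)) * Rabs (v_of n u x) ^ 2) a Rr <=
    Rr ^ (n - 1) * (eps * (Rr ^ (n - 1) * Pb)) + Rr ^ (n - 1) * first_integral n eps u Rr * Pb / eps * Rr.
Proof.
  intros HPb a Ha. admissible_facts A.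
  set (M := first_integral n eps u Rr).
  assert (HM : 0 <= M) by (apply (first_integral_nonneg A); lra).
  assert (HPb0 : 0 <= Pb) by (apply Rle_trans with (D1 u Rr); [apply (du_nonneg A)|apply HPb]; lra).
  set (c := Rr ^ (n - 1) * M * Pb / eps).
  assert (HRn : 0 < Rr ^ (n - 1)) by (apply pow_lt; lra).
  assert (Hc0 : 0 <= c) by (unfold c; apply Rdiv_le_0_compat; [|lra]; apply Rmult_le_pos; [apply Rmult_le_pos|]; lra).
  eapply Rle_trans.
  (* [x^(2(n-1)) v^2 = x^(n-1) v w_r <= R^(n-1) (v w)_r + c], since [v_r w >= - M Pb / eps]. *)
  - apply (RInt_le_antiderivative _ (fun x => Rr ^ (n - 1) * (v_of n u x * w_of n u x))
      (fun x => Rr ^ (n - 1) * (dv_of n u x * w_of n u x + v_of n u x * dw_of n u x)) c a Rr); [lra| | | |].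
    + intros x Hx.
      pose proof (is_derive_mult _ _ _ _ _ (is_derive_v A x ltac:(lra)) (is_derive_w A x Hn ltac:(lra))
        ltac:(intros; apply Rmult_comm)) as H3.
      pose proof (is_derive_scal _ x (Rr ^ (n - 1)) _ H3) as H4.
      refine (is_derive_eq _ _ _ _ H4 _). unfold scal, plus, mult; simpl; unfold mult, plus; simpl. ring.
    + intros x Hx. pose proof (continuity_dv A x ltac:(lra)). pose proof (continuity_v A x ltac:(lra)).
      pose proof (continuity_w A x ltac:(lra)). pose proof (continuity_dw A x ltac:(lra)).
      apply cpt_mult; [apply cpt_const|]. apply cpt_plus; apply cpt_mult; auto.
    + intros x Hx. apply cpt_mult; [apply cpt_pow, cpt_id| apply cpt_pow, cpt_abs, (continuity_v A x); lra].
    + intros x Hx.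
      rewrite dw_of_eq by (auto; lra).
      assert (Hxn : 0 < x ^ (n - 1)) by (apply pow_lt; lra).
      assert (Hxle : x ^ (n - 1) <= Rr ^ (n - 1)) by (apply pow_incr; lra).
      pose proof (dv_mul_w_lower A Pb HPb x ltac:(lra)) as HVw. fold M in HVw.
      rewrite pow2_abs.
      replace (x ^ (2 * (n - 1))) with (x ^ (n - 1) * x ^ (n - 1)) by (rewrite <- pow_add; f_equal; lia).
      set (Vx := x ^ (n - 1) * v_of n u x ^ 2).
      assert (HVx : 0 <= Vx) by (unfold Vx; apply Rmult_le_pos; [lra|apply pow2_ge_0]).
      assert (x ^ (n - 1) * Vx <= Rr ^ (n - 1) * Vx) by (apply Rmult_le_compat_r; lra).
      assert (Rr ^ (n - 1) * (- (M * Pb / eps)) <= Rr ^ (n - 1) * (dv_of n u x * w_of n u x))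
        by (apply Rmult_le_compat_l; lra).
      unfold c. replace (Rr ^ (n - 1) * M * Pb / eps) with (Rr ^ (n - 1) * (M * Pb / eps)) by (unfold Rdiv; ring).
      unfold Vx in *. nra.
  - rewrite (v_at_R A). unfold w_of.
    assert (Hva : 0 <= v_of n u a) by (apply (v_nonneg A); lra).
    assert (Hwa : 0 <= a ^ (n - 1) * D1 u a) by (apply Rmult_le_pos; [apply pow_le; lra|apply (du_nonneg A); lra]).
    assert (HwR : Rr ^ (n - 1) * D1 u Rr <= Rr ^ (n - 1) * Pb) by (apply Rmult_le_compat_l; [lra|apply HPb; lra]).
    assert (0 <= Rr ^ (n - 1) * (v_of n u a * (a ^ (n - 1) * D1 u a))) by (apply Rmult_le_pos; [lra|apply Rmult_le_pos; auto]).
    assert (Rr ^ (n - 1) * (eps * (Rr ^ (n - 1) * D1 u Rr)) <= Rr ^ (n - 1) * (eps * (Rr ^ (n - 1) * Pb))).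
    { apply Rmult_le_compat_l; [lra|]. apply Rmult_le_compat_l; lra. }
    assert (c * (Rr - a) <= c * Rr) by (apply Rmult_le_compat_l; lra).
    unfold c in *. lra.
Qed.

(** * Bounds read off a reference solution *)

Section Reference.

Context {n : nat} {Rr : R} {f u1 : R -> R} (A1 : admissible n Rr 1 f u1) (S1 : R)
  (HS1 : forall x, 0 <= x <= Rr -> Rabs (D2 u1 x) <= S1).

Lemma du_le_linear x : 0 < x <= Rr -> D1 u1 x <= S1 * x.
Proof.
  intros Hx.
  destruct (MVT_cor2 (D1 u1) (D2 u1) 0 x) as [xi [Hxi1 Hxi2]]; [lra| |].
  { intros c Hc. apply is_derive_Reals, (is_derive_du A1). lra. }
  rewrite (sol_du_0 A1) in Hxi1.
  assert (D2 u1 xi <= S1) by (apply Rle_trans with (Rabs (D2 u1 xi)); [apply Rle_abs| apply HS1; lra]).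
  assert (D2 u1 xi * x <= S1 * x) by (apply Rmult_le_compat_r; lra). lra.
Qed.

Lemma v_le_bound a : 0 < a <= Rr -> v_of n u1 a <= INR n * S1.
Proof.
  intros Ha. pose proof (INR_n_ge_2 A1). unfold v_of.
  assert (D2 u1 a <= S1) by (apply Rle_trans with (Rabs (D2 u1 a)); [apply Rle_abs| apply HS1; lra]).
  assert (D1 u1 a / a <= S1).
  { apply Rmult_le_reg_r with a; [lra|]. unfold Rdiv. rewrite Rmult_assoc, Rinv_l by lra.
    pose proof (du_le_linear a Ha). lra. }
  replace ((INR n - 1) / a * D1 u1 a) with ((INR n - 1) * (D1 u1 a / a)) by (field; lra).
  assert ((INR n - 1) * (D1 u1 a / a) <= (INR n - 1) * S1) by (apply Rmult_le_compat_l; lra).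
  lra.
Qed.

Lemma first_integral_weight_le x : 0 < x <= Rr ->
  first_integral n 1 u1 x / x ^ (n - 1) <= S1 ^ n * Rr - dv_of n u1 x.
Proof.
  intros Hx. admissible_facts A1. pose proof (scaled_dv_eq n 1 u1 x) as E.
  assert (Hxn : 0 < x ^ (n - 1)) by (apply pow_lt; lra).
  assert (HQ : first_integral n 1 u1 x = D1 u1 x ^ n / INR n - x ^ (n - 1) * dv_of n u1 x) by lra.
  replace (first_integral n 1 u1 x / x ^ (n - 1)) with (D1 u1 x ^ n / INR n / x ^ (n - 1) - dv_of n u1 x)
    by (rewrite HQ; field; lra).
  assert (Hp0 : 0 <= D1 u1 x) by (apply (du_nonneg A1); lra).
  assert (Hpn : D1 u1 x ^ n <= (S1 * x) ^ n) by (apply pow_incr; split; auto; apply du_le_linear; lra).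
  assert (D1 u1 x ^ n / INR n <= D1 u1 x ^ n).
  { unfold Rdiv. assert (0 <= D1 u1 x ^ n) by (apply pow_le; auto).
    assert (/ INR n <= 1) by (rewrite <- Rinv_1; apply Rinv_le_contravar; lra). nra. }
  assert (D1 u1 x ^ n / INR n / x ^ (n - 1) <= S1 ^ n * x).
  { apply Rmult_le_reg_r with (x ^ (n - 1)); auto. unfold Rdiv. rewrite Rmult_assoc, Rinv_l, Rmult_1_r by lra.
    assert (E2 : (S1 * x) ^ n = S1 ^ n * x * x ^ (n - 1)).
    { assert (Hnn : n = S (n - 1)) by lia.
      rewrite Rpow_mult_distr. rewrite Hnn at 2. rewrite <- tech_pow_Rmult. ring. }
    lra. }
  assert (S1 ^ n * x <= S1 ^ n * Rr)
    by (apply Rmult_le_compat_l; [apply pow_le; pose proof (HS1 0 ltac:(lra)); pose proof (Rabs_pos (D2 u1 0))|]; lra).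
  lra.
Qed.

(* On [[r, 2r]], [v + (c - S1^n R) s] is nonincreasing for [c = Q(r)/(2r)^(n-1)]; comparing its
   values at [r] and [2r] and using [0 <= v <= n S1] bounds [c r]. *)
Lemma first_integral_le_pow_small r : 0 < r <= Rr / 2 ->
  first_integral n 1 u1 r <= 2 ^ (n - 1) * (INR n * S1 + S1 ^ n * Rr ^ 2) * r ^ (n - 2).
Proof.
  intros Hr. admissible_facts A1.
  assert (HS0 : 0 <= S1) by (pose proof (HS1 0 ltac:(lra)); pose proof (Rabs_pos (D2 u1 0)); lra).
  set (G := INR n * S1 + S1 ^ n * Rr ^ 2).
  assert (HQr : 0 <= first_integral n 1 u1 r) by (apply (first_integral_nonneg A1); lra).
  assert (Hrn2 : 0 < r ^ (n - 2)) by (apply pow_lt; lra).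
  set (c := first_integral n 1 u1 r / (2 * r) ^ (n - 1)).
  assert (H2r : 0 < (2 * r) ^ (n - 1)) by (apply pow_lt; lra).
  assert (Hc : 0 <= c) by (apply Rdiv_le_0_compat; auto).
  assert (Hdec : v_of n u1 (2 * r) + (c - S1 ^ n * Rr) * (2 * r) <= v_of n u1 r + (c - S1 ^ n * Rr) * r).
  { apply (ge_of_is_derive_nonpos (fun s => v_of n u1 s + (c - S1 ^ n * Rr) * s)
      (fun s => dv_of n u1 s + (c - S1 ^ n * Rr)) r (2 * r)); [lra| | |].
    - intros s Hs.
      pose proof (is_derive_plus _ _ _ _ _ (is_derive_v A1 s ltac:(lra))
        (is_derive_scal (fun s => s) s (c - S1 ^ n * Rr) 1 (is_derive_id s))) as H3.
      refine (is_derive_eq _ _ _ _ H3 _). unfold plus, scal; simpl; unfold mult; simpl. ring.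
    - intros s Hs. pose proof (first_integral_weight_le s ltac:(lra)).
      assert (HQs : first_integral n 1 u1 r <= first_integral n 1 u1 s) by (apply (first_integral_mono A1); lra).
      assert (Hsn : 0 < s ^ (n - 1)) by (apply pow_lt; lra).
      assert (Hsn2 : s ^ (n - 1) <= (2 * r) ^ (n - 1)) by (apply pow_incr; lra).
      assert (c <= first_integral n 1 u1 s / s ^ (n - 1)); [|lra].
      unfold c. apply Rle_trans with (first_integral n 1 u1 r / s ^ (n - 1)).
      + unfold Rdiv. apply Rmult_le_compat_l; auto. apply Rinv_le_contravar; auto.
      + unfold Rdiv. apply Rmult_le_compat_r; [left; apply Rinv_0_lt_compat|]; auto.
    - intros s Hs. apply cpt_plus; [apply (continuity_v A1 s); lra|].
      apply cpt_mult; [apply cpt_const|apply cpt_id]. }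
  assert (Hv2r : 0 <= v_of n u1 (2 * r)) by (apply (v_nonneg A1); lra).
  assert (Hvr : v_of n u1 r <= INR n * S1) by (apply v_le_bound; lra).
  assert (Hcr : c * r <= G).
  { unfold G. assert (S1 ^ n * Rr * r <= S1 ^ n * Rr ^ 2); [|nra].
    simpl. rewrite Rmult_1_r, Rmult_assoc. apply Rmult_le_compat_l; [apply pow_le; auto|].
    apply Rmult_le_compat_l; lra. }
  replace (first_integral n 1 u1 r) with (c * r * (2 ^ (n - 1) * r ^ (n - 2))).
  2: { unfold c. rewrite Rpow_mult_distr.
       replace (r ^ (n - 1)) with (r * r ^ (n - 2)) by (replace (n - 1)%nat with (S (n - 2)) by lia; reflexivity).
       field. split; [apply pow_nonzero; lra|]. split; [lra|apply pow_nonzero; lra]. }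
  assert (0 < 2 ^ (n - 1) * r ^ (n - 2)) by (apply Rmult_lt_0_compat; [apply pow_lt; lra|auto]).
  assert (c * r * (2 ^ (n - 1) * r ^ (n - 2)) <= G * (2 ^ (n - 1) * r ^ (n - 2))) by (apply Rmult_le_compat_r; lra).
  lra.
Qed.

Lemma first_integral_le_pow : exists BF, 0 <= BF /\
  forall r, 0 < r <= Rr -> first_integral n 1 u1 r <= BF * r ^ (n - 2).
Proof.
  admissible_facts A1.
  assert (HS0 : 0 <= S1) by (pose proof (HS1 0 ltac:(lra)); pose proof (Rabs_pos (D2 u1 0)); lra).
  set (M1 := first_integral n 1 u1 Rr).
  assert (HM1 : 0 <= M1) by (apply (first_integral_nonneg A1); lra).
  set (G := INR n * S1 + S1 ^ n * Rr ^ 2).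
  assert (HG : 0 <= G) by (unfold G; assert (0 <= S1^n) by (apply pow_le; auto); nra).
  assert (HR2 : 0 < (Rr / 2) ^ (n - 2)) by (apply pow_lt; lra).
  exists (2 ^ (n - 1) * G + M1 / (Rr / 2) ^ (n - 2)). split.
  { apply Rplus_le_le_0_compat; [apply Rmult_le_pos; [apply pow_le; lra|auto]|apply Rdiv_le_0_compat; auto]. }
  intros r Hr.
  assert (Hrn2 : 0 < r ^ (n - 2)) by (apply pow_lt; lra).
  assert (0 <= M1 / (Rr / 2) ^ (n - 2) * r ^ (n - 2)) by (apply Rmult_le_pos; [apply Rdiv_le_0_compat|]; lra).
  assert (0 <= 2 ^ (n - 1) * G * r ^ (n - 2)) by (apply Rmult_le_pos; [apply Rmult_le_pos; [apply pow_le|]|]; lra).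
  destruct (Rle_or_lt r (Rr / 2)) as [Hsmall|Hbig].
  - pose proof (first_integral_le_pow_small r ltac:(lra)). fold G in H1. nra.
  - assert (first_integral n 1 u1 r <= M1) by (apply (first_integral_mono A1); lra).
    assert ((Rr / 2) ^ (n - 2) <= r ^ (n - 2)) by (apply pow_incr; lra).
    assert (M1 <= M1 / (Rr / 2) ^ (n - 2) * r ^ (n - 2)).
    { unfold Rdiv. rewrite Rmult_assoc. rewrite <- (Rmult_1_r M1) at 1. apply Rmult_le_compat_l; auto.
      apply Rmult_le_reg_l with ((Rr / 2) ^ (n - 2)); auto. rewrite <- Rmult_assoc, Rinv_r; lra. }
    nra.
Qed.

End Reference.

#[local] Set Implicit Arguments.

(* The solution for [eps = 1] serves as a reference: since [Q] does not depend on [eps],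
   bounds on [Q] read off it hold uniformly in [eps]. *)
Record reference_bounds (n : nat) (Rr : R) (f u1 : R -> R) (S1 BF : R) : Prop := {
  ref_adm : admissible n Rr 1 f u1;
  ref_S1 : 0 <= S1;
  ref_BF : 0 <= BF;
  ref_first_integral_le : forall x, 0 < x <= Rr -> first_integral n 1 u1 x <= BF * x ^ (n - 2);
  ref_first_integral_weight : forall x, 0 < x <= Rr ->
    first_integral n 1 u1 x / x ^ (n - 1) <= S1 ^ n * Rr - dv_of n u1 x;
  ref_v_le : forall a, 0 < a <= Rr -> v_of n u1 a <= INR n * S1 }.

#[local] Unset Implicit Arguments.

Lemma reference_bounds_exist {n Rr f u1} (A1 : admissible n Rr 1 f u1) :
  exists S1 BF, reference_bounds n Rr f u1 S1 BF.
Proof.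
  pose proof (adm_R A1) as HR.
  destruct (continuity_ab_maj (fun x => Rabs (D2 u1 x)) 0 Rr) as [xm [Hxm _]]; [lra| |].
  { intros c Hc. apply cpt_abs, (sol_continuous_2 A1 Hc). }
  set (S1 := Rabs (D2 u1 xm)).
  destruct (first_integral_le_pow A1 S1 Hxm) as [BF [HBF Hle]].
  exists S1, BF. constructor; auto.
  - apply Rabs_pos.
  - apply (first_integral_weight_le A1 S1 Hxm).
  - apply (v_le_bound A1 S1 Hxm).
Qed.

Definition integrand_vii_1 n (u : R -> R) alpha x := Rpower x (INR n - 2 - alpha) * Rabs (v_of n u x) ^ 2.
Definition integrand_vii_2 n (u : R -> R) alpha x := Rpower x (- alpha) * D1 u x ^ n * v_of n u x.
Definition integrand_viii_1 n (u : R -> R) x := x ^ (n - 1) * Rabs (dv_of n u x) ^ 2.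
Definition integrand_viii_2 n (u : R -> R) x := D1 u x ^ (n - 1) * Rabs (v_of n u x) ^ 2.
Definition integrand_ix_1 (u : R -> R) alpha x := Rpower x (2 - alpha) * Rabs (dv_of 2 u x) ^ 2.
Definition integrand_ix_2 (u : R -> R) alpha x := Rpower x (1 - alpha) * D1 u x * Rabs (v_of 2 u x) ^ 2.

Definition bound_vii n Rr eps S1 BF alpha :=
  eps ^ 3 * Rpower Rr (INR n - 1 - alpha) / 2 +
  BF * Rpower Rr (INR n - 1 - alpha) / (eps * (INR n - 1 - alpha)) * (S1 ^ n * Rr ^ 2 + INR n * S1).

Lemma sq_weight_le n Rr BF K alpha x q : (2 <= n)%nat -> alpha < INR n - 1 -> 0 < x <= Rr -> 0 <= q ->
  q <= BF * x ^ (n - 2) -> q / x ^ (n - 1) <= K ->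
  Rpower x (2 - INR n - alpha) * q ^ 2 <= BF * Rpower Rr (INR n - 1 - alpha) * K.
Proof.
  intros Hn Ha Hx Hq K1 K2.
  assert (Hxn : 0 < x ^ (n - 1)) by (apply pow_lt; lra).
  assert (E1 : Rpower x (2 - INR n - alpha) = Rpower x (1 - alpha) / x ^ (n - 1)).
  { rewrite <- Rpower_pow by lra. rewrite INR_sub_1 by lia. unfold Rdiv.
    rewrite <- Rpower_Ropp, <- Rpower_plus. f_equal. ring. }
  assert (E2 : x ^ (n - 2) * Rpower x (1 - alpha) = Rpower x (INR n - 1 - alpha)).
  { rewrite <- Rpower_pow by lra. rewrite INR_sub_2 by lia. rewrite <- Rpower_plus. f_equal. ring. }
  assert (HBF : 0 <= BF).
  { assert (0 < x ^ (n - 2)) by (apply pow_lt; lra). destruct (Rle_or_lt 0 BF); auto. nra. }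
  assert (HQb : q * Rpower x (1 - alpha) <= BF * Rpower Rr (INR n - 1 - alpha)).
  { apply Rle_trans with (BF * x ^ (n - 2) * Rpower x (1 - alpha)).
    - apply Rmult_le_compat_r; [left; apply Rpower_pos|]. auto.
    - rewrite Rmult_assoc, E2. apply Rmult_le_compat_l; auto. apply Rle_Rpower_l; lra. }
  assert (Hg : 0 <= q / x ^ (n - 1)) by (apply Rdiv_le_0_compat; lra).
  rewrite E1.
  replace (Rpower x (1 - alpha) / x ^ (n - 1) * q ^ 2) with ((q / x ^ (n - 1)) * (q * Rpower x (1 - alpha)))
    by (field; lra).
  assert (0 <= q * Rpower x (1 - alpha)) by (apply Rmult_le_pos; [lra|left; apply Rpower_pos]).
  apply Rle_trans with (K * (q * Rpower x (1 - alpha))).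
  - apply Rmult_le_compat_r; auto.
  - rewrite Rmult_comm. apply Rmult_le_compat_r; lra.
Qed.

Section Estimates.

Context {n : nat} {Rr eps : R} {f u u1 : R -> R} {S1 BF : R}
  (A : admissible n Rr eps f u) (Rd : reference_bounds n Rr f u1 S1 BF).

Lemma first_integral_ref x : 0 < x <= Rr -> first_integral n eps u x = first_integral n 1 u1 x.
Proof.
  apply (first_integral_indep A (ref_adm Rd) (adm_n A) (adm_R A)); [pose proof (adm_eps A)|]; lra.
Qed.

Lemma first_integral_sq_weight_le alpha x : alpha < INR n - 1 -> 0 < x <= Rr ->
  Rpower x (2 - INR n - alpha) * first_integral n eps u x ^ 2
    <= BF * Rpower Rr (INR n - 1 - alpha) * (S1 ^ n * Rr - dv_of n u1 x).
Proof.
  intros Ha Hx. apply (sq_weight_le n Rr BF _ alpha x _ (adm_n A) Ha Hx).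
  - apply (first_integral_nonneg A). lra.
  - rewrite first_integral_ref by lra. apply (ref_first_integral_le Rd Hx).
  - rewrite first_integral_ref by lra. apply (ref_first_integral_weight Rd Hx).
Qed.

Lemma reference_weight_integral_le C a : 0 <= C -> 0 < a < Rr ->
  - (C * v_of n u1 Rr) + C * v_of n u1 a + C * (S1 ^ n * Rr) * (Rr - a) <= C * (S1 ^ n * Rr ^ 2 + INR n * S1).
Proof.
  intros HC Ha. pose proof (ref_adm Rd) as A1.
  rewrite (v_at_R A1).
  assert (0 <= v_of n u1 a) by (apply (v_nonneg A1); lra).
  assert (v_of n u1 a <= INR n * S1) by (apply (ref_v_le Rd); lra).
  assert (HS : 0 <= S1 ^ n) by (apply pow_le, (ref_S1 Rd)).
  assert (S1 ^ n * Rr * (Rr - a) <= S1 ^ n * Rr ^ 2).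
  { replace (Rr ^ 2) with (Rr * Rr) by ring. rewrite Rmult_assoc.
    apply Rmult_le_compat_l; auto. apply Rmult_le_compat_l; lra. }
  assert (C * (S1 ^ n * Rr) * (Rr - a) <= C * (S1 ^ n * Rr ^ 2)) by (rewrite Rmult_assoc; apply Rmult_le_compat_l; auto).
  assert (C * v_of n u1 a <= C * (INR n * S1)) by (apply Rmult_le_compat_l; auto).
  nra.
Qed.

Lemma continuity_integrand_vii_1 alpha x : 0 < x <= Rr -> continuity_pt (integrand_vii_1 n u alpha) x.
Proof.
  intros Hx. unfold integrand_vii_1.
  apply cpt_mult; [apply cpt_Rpower; lra | apply cpt_pow, cpt_abs, (continuity_v A x); lra].
Qed.

Lemma continuity_integrand_vii_2 alpha x : 0 < x <= Rr -> continuity_pt (integrand_vii_2 n u alpha) x.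
Proof.
  intros Hx. unfold integrand_vii_2. apply cpt_mult; [apply cpt_mult|].
  - apply cpt_Rpower; lra.
  - apply cpt_pow, (continuity_du A x); lra.
  - apply (continuity_v A x); lra.
Qed.

Lemma integrand_vii_1_nonneg alpha x : 0 <= integrand_vii_1 n u alpha x.
Proof. unfold integrand_vii_1. apply Rmult_le_pos; [left; apply Rpower_pos|]. apply pow_le, Rabs_pos. Qed.

Lemma integrand_vii_2_nonneg alpha x : 0 < x <= Rr -> 0 <= integrand_vii_2 n u alpha x.
Proof.
  intros Hx. unfold integrand_vii_2.
  apply Rmult_le_pos; [apply Rmult_le_pos|].
  - left; apply Rpower_pos.
  - apply pow_le, (du_nonneg A); lra.
  - apply (v_nonneg A); lra.
Qed.

(* Pointwise form of the energy inequality behind (vii): multiply [eps r^(n-1) v_r = u_r^n / n - Q]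
   by [r^(-alpha) v], absorb the [Q] term by Young's inequality, and control [Q^2] with the
   reference bounds. *)
Lemma vii_pointwise alpha x : alpha < INR n - 1 -> 0 < x <= Rr ->
  / INR n * integrand_vii_2 n u alpha x + eps * (INR n - 1 - alpha) / 4 * integrand_vii_1 n u alpha x <=
  eps / 2 * ((INR n - 1 - alpha) * Rpower x (INR n - 1 - alpha - 1) * v_of n u x ^ 2
             + Rpower x (INR n - 1 - alpha) * (2 * v_of n u x * dv_of n u x))
  + BF * Rpower Rr (INR n - 1 - alpha) / (eps * (INR n - 1 - alpha)) * (S1 ^ n * Rr - dv_of n u1 x).
Proof.
  intros Ha Hx. admissible_facts A.
  set (beta := INR n - 1 - alpha). set (C := BF * Rpower Rr beta / (eps * beta)).
  assert (Hb : 0 < beta) by (unfold beta; lra).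
  assert (Hn0 : 0 < INR n) by lra.
  unfold integrand_vii_1, integrand_vii_2.
  set (v := v_of n u x). set (p := D1 u x). set (V := dv_of n u x). set (Q := first_integral n eps u x).
  pose proof (scaled_dv_eq n eps u x) as E. fold V p Q in E.
  assert (HQ0 : 0 <= Q) by (apply (first_integral_nonneg A); lra).
  assert (HK := first_integral_sq_weight_le alpha x Ha ltac:(lra)). fold Q beta in HK.
  assert (RP1 : Rpower x beta = Rpower x (- alpha) * x ^ (n - 1)).
  { rewrite <- Rpower_pow by lra. rewrite INR_sub_1 by lia. rewrite <- Rpower_plus. f_equal. unfold beta; ring. }
  assert (RP2 : Rpower x (beta - 1) = Rpower x (INR n - 2 - alpha)) by (f_equal; unfold beta; ring).
  assert (Ham := young_ineq (Rpower x ((INR n - 2 - alpha) / 2) * v) (Rpower x ((2 - INR n - alpha) / 2) * Q)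
                  (eps * beta / 4) ltac:(nra)).
  assert (X1 : Rpower x ((INR n - 2 - alpha) / 2) * v * (Rpower x ((2 - INR n - alpha) / 2) * Q)
               = Rpower x (- alpha) * v * Q).
  { replace (Rpower x ((INR n - 2 - alpha) / 2) * v * (Rpower x ((2 - INR n - alpha) / 2) * Q))
      with ((Rpower x ((INR n - 2 - alpha) / 2) * Rpower x ((2 - INR n - alpha) / 2)) * v * Q) by ring.
    rewrite <- Rpower_plus. do 3 f_equal. field. }
  assert (X2 : (Rpower x ((INR n - 2 - alpha) / 2) * v) ^ 2 = Rpower x (INR n - 2 - alpha) * v ^ 2).
  { rewrite Rpow_mult_distr. f_equal. simpl. rewrite Rmult_1_r, <- Rpower_plus. f_equal. field. }
  assert (X3 : (Rpower x ((2 - INR n - alpha) / 2) * Q) ^ 2 = Rpower x (2 - INR n - alpha) * Q ^ 2).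
  { rewrite Rpow_mult_distr. f_equal. simpl. rewrite Rmult_1_r, <- Rpower_plus. f_equal. field. }
  rewrite X1, X2, X3 in Ham.
  rewrite pow2_abs. rewrite RP2.
  assert (HD : eps / 2 * (Rpower x beta * (2 * v * V)) = Rpower x (- alpha) * v * (p ^ n / INR n - Q)).
  { rewrite <- E, RP1. field. }
  replace (eps / 2 * (beta * Rpower x (INR n - 2 - alpha) * v ^ 2 + Rpower x beta * (2 * v * V)))
    with (eps / 2 * beta * Rpower x (INR n - 2 - alpha) * v ^ 2 + eps / 2 * (Rpower x beta * (2 * v * V))) by ring.
  rewrite HD.
  assert (HCk : Rpower x (2 - INR n - alpha) * Q ^ 2 / (4 * (eps * beta / 4)) <= C * (S1 ^ n * Rr - dv_of n u1 x)).
  { unfold C. replace (4 * (eps * beta / 4)) with (eps * beta) by field.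
    unfold Rdiv. replace (BF * Rpower Rr beta * / (eps * beta) * (S1 ^ n * Rr - dv_of n u1 x))
      with (BF * Rpower Rr beta * (S1 ^ n * Rr - dv_of n u1 x) * / (eps * beta)) by ring.
    apply Rmult_le_compat_r; [left; apply Rinv_0_lt_compat; nra|]. exact HK. }
  replace (/ INR n * (Rpower x (- alpha) * p ^ n * v)) with (Rpower x (- alpha) * v * (p ^ n / INR n)) by (field; lra).
  nra.
Qed.

Lemma RInt_vii_le alpha : alpha < INR n - 1 -> forall a, 0 < a < Rr ->
  / INR n * RInt (integrand_vii_2 n u alpha) a Rr
    + (eps * (INR n - 1 - alpha) / 4) * RInt (integrand_vii_1 n u alpha) a Rr
  <= bound_vii n Rr eps S1 BF alpha.
Proof.
  intros Ha a Haa. admissible_facts A.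
  set (beta := INR n - 1 - alpha).
  assert (Hb : 0 < beta) by (unfold beta; lra).
  set (C := BF * Rpower Rr beta / (eps * beta)).
  assert (HC : 0 <= C) by (unfold C; apply Rdiv_le_0_compat; [apply Rmult_le_pos; [apply (ref_BF Rd)|left; apply Rpower_pos]|nra]).
  pose proof (ref_adm Rd) as A1.
  rewrite <- RInt_linear_comb; [| lra | intros x Hx; apply continuity_integrand_vii_2; lra | intros x Hx; apply continuity_integrand_vii_1; lra].
  eapply Rle_trans.
  - apply (RInt_le_antiderivative _
      (fun x => eps / 2 * (Rpower x beta * v_of n u x ^ 2) - C * v_of n u1 x)
      (fun x => eps / 2 * (beta * Rpower x (beta - 1) * v_of n u x ^ 2 + Rpower x beta * (2 * v_of n u x * dv_of n u x))
                - C * dv_of n u1 x)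
      (C * (S1 ^ n * Rr)) a Rr); [lra| | | |].
    + intros x Hx.
      pose proof (is_derive_Rpower x beta ltac:(lra)) as H1.
      pose proof (is_derive_pow (v_of n u) 2 x _ (is_derive_v A x ltac:(lra))) as H2.
      pose proof (is_derive_mult _ _ _ _ _ H1 H2 ltac:(intros; apply Rmult_comm)) as H3.
      pose proof (is_derive_scal _ x (eps / 2) _ H3) as H4.
      pose proof (is_derive_scal _ x C _ (is_derive_v A1 x ltac:(lra))) as H5.
      pose proof (is_derive_minus _ _ _ _ _ H4 H5) as H6.
      refine (is_derive_eq _ _ _ _ H6 _). unfold scal, plus, mult, minus, opp; simpl; unfold mult, plus, opp; simpl. ring.
    + intros x Hx. pose proof (continuity_v A x ltac:(lra)). pose proof (continuity_dv A x ltac:(lra)).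
      pose proof (continuity_dv A1 x ltac:(lra)). cont_tac; nra.
    + intros x Hx. apply cpt_plus; apply cpt_mult; try apply cpt_const;
      [apply continuity_integrand_vii_2|apply continuity_integrand_vii_1]; lra.
    + intros x Hx. pose proof (vii_pointwise alpha x Ha ltac:(lra)). unfold C, beta in *. lra.
  - rewrite (v_at_R A). pose proof (reference_weight_integral_le C a HC Haa).
    assert (0 <= eps / 2 * (Rpower a beta * v_of n u a ^ 2)).
    { apply Rmult_le_pos; [lra|]. apply Rmult_le_pos; [left; apply Rpower_pos|apply pow2_ge_0]. }
    unfold bound_vii. fold beta C.
    replace (eps / 2 * (Rpower Rr beta * eps ^ 2)) with (eps ^ 3 * Rpower Rr beta / 2) by (simpl; field).
    lra.
Qed.


Lemma RInt_vii_2_le alpha : alpha < INR n - 1 -> forall a, 0 < a < Rr ->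
  RInt (integrand_vii_2 n u alpha) a Rr <= INR n * bound_vii n Rr eps S1 BF alpha.
Proof.
  intros Ha a Haa. admissible_facts A.
  pose proof (RInt_vii_le alpha Ha a Haa) as H.
  assert (0 <= RInt (integrand_vii_1 n u alpha) a Rr).
  { apply RInt_ge_0; [lra| apply ex_RInt_cont; [lra|intros; apply continuity_integrand_vii_1; lra]|].
    intros; apply integrand_vii_1_nonneg. }
  assert (0 <= eps * (INR n - 1 - alpha) / 4) by (apply Rdiv_le_0_compat; [apply Rmult_le_pos|]; lra).
  assert (/ INR n * RInt (integrand_vii_2 n u alpha) a Rr <= bound_vii n Rr eps S1 BF alpha) by nra.
  replace (RInt (integrand_vii_2 n u alpha) a Rr)
    with (INR n * (/ INR n * RInt (integrand_vii_2 n u alpha) a Rr)) by (field; lra).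
  apply Rmult_le_compat_l; lra.
Qed.

Lemma viii_pointwise x : (3 <= n)%nat -> 0 < x <= Rr ->
  eps * integrand_viii_1 n u x + integrand_viii_2 n u x <=
  dv_of n u x * (D1 u x ^ n / INR n) + v_of n u x * (INR n * D2 u x * D1 u x ^ (n - 1) / INR n)
  + (INR n - 1) * integrand_vii_2 n u 1 x
  + BF * Rpower Rr (INR n - 2) / eps * (S1 ^ n * Rr - dv_of n u1 x).
Proof.
  intros Hn3 Hx. admissible_facts A.
  assert (Ha1 : 1 < INR n - 1) by (assert (H3 : INR 3 <= INR n) by (apply le_INR; lia); simpl in H3; lra).
  set (C := BF * Rpower Rr (INR n - 2) / eps).
  unfold integrand_viii_1, integrand_viii_2, integrand_vii_2.
  set (v := v_of n u x). set (p := D1 u x). set (V := dv_of n u x). set (Q := first_integral n eps u x).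
  pose proof (scaled_dv_eq n eps u x) as E. fold V p Q in E.
  assert (HQ0 : 0 <= Q) by (apply (first_integral_nonneg A); lra).
  assert (HK := first_integral_sq_weight_le 1 x ltac:(lra) ltac:(lra)). fold Q in HK.
  assert (Hxn : 0 < x ^ (n - 1)) by (apply pow_lt; lra).
  assert (RP : Rpower x (2 - INR n - 1) = / x ^ (n - 1)).
  { rewrite <- Rpower_pow by lra. rewrite INR_sub_1 by lia. rewrite <- (Rpower_Ropp x (INR n - 1)). f_equal. ring. }
  rewrite RP in HK.
  assert (Rm1 : Rpower x (Ropp 1) = / x).
  { rewrite Rpower_Ropp, Rpower_1; lra. }
  rewrite Rm1.
  assert (Hq : D2 u x = v - (INR n - 1) / x * p) by (unfold v, v_of; fold p; ring).
  rewrite Hq. rewrite !pow2_abs.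
  assert (HV : V = (p ^ n / INR n - Q) / (eps * x ^ (n - 1))).
  { rewrite <- E. field. split; lra. }
  assert (HVQ : - (V * Q) <= C * (S1 ^ n * Rr - dv_of n u1 x)).
  { rewrite HV. unfold C.
    assert (0 <= p ^ n / INR n * Q / (eps * x ^ (n - 1))).
    { apply Rdiv_le_0_compat; [apply Rmult_le_pos; [apply Rdiv_le_0_compat; [apply pow_le, (du_nonneg A); lra|lra]|lra]|nra]. }
    replace (- ((p ^ n / INR n - Q) / (eps * x ^ (n - 1)) * Q)) with
      (/ x ^ (n - 1) * Q ^ 2 / eps - p ^ n / INR n * Q / (eps * x ^ (n - 1))) by (field; lra).
    assert (/ x ^ (n - 1) * Q ^ 2 / eps <= BF * Rpower Rr (INR n - 1 - 1) * (S1 ^ n * Rr - dv_of n u1 x) / eps).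
    { unfold Rdiv. apply Rmult_le_compat_r; [left; apply Rinv_0_lt_compat; lra|auto]. }
    replace (INR n - 1 - 1) with (INR n - 2) in H0 by ring.
    replace (BF * Rpower Rr (INR n - 2) / eps * (S1 ^ n * Rr - dv_of n u1 x)) with
      (BF * Rpower Rr (INR n - 2) * (S1 ^ n * Rr - dv_of n u1 x) / eps) by (field; lra).
    lra. }
  assert (HpV : eps * (x ^ (n - 1) * V ^ 2) = V * (p ^ n / INR n - Q)) by (rewrite <- E; ring).
  assert (Hpn : p ^ Init.Nat.pred n * p = p ^ n).
  { replace n with (S (Init.Nat.pred n)) at 2 by lia. simpl. ring. }
  assert (Hpn1 : Init.Nat.pred n = (n - 1)%nat) by lia.
  rewrite Hpn1 in Hpn.
  replace (eps * (x ^ (n - 1) * V ^ 2) + p ^ (n - 1) * v ^ 2)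
    with (V * (p ^ n / INR n) - V * Q + p ^ (n - 1) * v ^ 2) by (rewrite HpV; ring).
  replace (v * (INR n * (v - (INR n - 1) / x * p) * p ^ (n - 1) / INR n))
    with (p ^ (n - 1) * v ^ 2 - (INR n - 1) * (/ x * p ^ n * v)) by (rewrite <- Hpn; field; lra).
  lra.
Qed.

Lemma RInt_viii_le Pb : (3 <= n)%nat -> (forall x, 0 <= x <= Rr -> D1 u x <= Pb) ->
  forall a, 0 < a < Rr ->
  eps * RInt (integrand_viii_1 n u) a Rr + RInt (integrand_viii_2 n u) a Rr <=
    eps * Pb ^ n + (INR n - 1) * (INR n * bound_vii n Rr eps S1 BF 1)
    + BF * Rpower Rr (INR n - 2) / eps * (S1 ^ n * Rr ^ 2 + INR n * S1).
Proof.
  intros Hn3 HPb a Haa. admissible_facts A.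
  assert (Ha1 : 1 < INR n - 1) by (assert (H3 : INR 3 <= INR n) by (apply le_INR; lia); simpl in H3; lra).
  pose proof (ref_adm Rd) as A1.
  set (C := BF * Rpower Rr (INR n - 2) / eps).
  assert (HC : 0 <= C) by (unfold C; apply Rdiv_le_0_compat; [apply Rmult_le_pos; [apply (ref_BF Rd)|left; apply Rpower_pos]|lra]).
  assert (Hc8a : forall x, a <= x <= Rr -> continuity_pt (integrand_viii_1 n u) x).
  { intros x Hx. unfold integrand_viii_1. apply cpt_mult; [apply cpt_pow, cpt_id|apply cpt_pow, cpt_abs, (continuity_dv A x); lra]. }
  assert (Hc8b : forall x, a <= x <= Rr -> continuity_pt (integrand_viii_2 n u) x).
  { intros x Hx. unfold integrand_viii_2. apply cpt_mult; [apply cpt_pow, (continuity_du A x); lra|apply cpt_pow, cpt_abs, (continuity_v A x); lra]. }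
  rewrite <- (Rmult_1_l (RInt (integrand_viii_2 n u) a Rr)).
  rewrite <- RInt_linear_comb; [|lra|auto|auto].
  eapply Rle_trans.
  - apply (RInt_le_antiderivative_plus _ (fun x => (INR n - 1) * integrand_vii_2 n u 1 x)
      (fun x => v_of n u x * (/ INR n * D1 u x ^ n) - C * v_of n u1 x)
      (fun x => dv_of n u x * (D1 u x ^ n / INR n) + v_of n u x * (INR n * D2 u x * D1 u x ^ Init.Nat.pred n / INR n)
                - C * dv_of n u1 x)
      (C * (S1 ^ n * Rr)) a Rr); [lra| | | | |].
    + intros x Hx.
      pose proof (is_derive_v A x ltac:(lra)) as H1.
      pose proof (is_derive_pow (D1 u) n x _ (is_derive_du A x ltac:(lra))) as H2.
      pose proof (is_derive_scal _ x (/ INR n) _ H2) as H2'.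
      pose proof (is_derive_mult _ _ _ _ _ H1 H2' ltac:(intros; apply Rmult_comm)) as H3.
      pose proof (is_derive_scal _ x C _ (is_derive_v A1 x ltac:(lra))) as H5.
      pose proof (is_derive_minus _ _ _ _ _ H3 H5) as H6.
      refine (is_derive_eq _ _ _ _ H6 _). unfold scal, plus, mult, minus, opp; simpl; unfold mult, plus, opp; simpl. field. lra.
    + intros x Hx. pose proof (continuity_dv A x ltac:(lra)). pose proof (continuity_v A x ltac:(lra)).
      pose proof (continuity_du A x ltac:(lra)). pose proof (sol_continuous_2 A (x := x) ltac:(lra)).
      pose proof (continuity_dv A1 x ltac:(lra)).
      cont_tac; lra.
    + intros x Hx. apply cpt_plus; apply cpt_mult; try apply cpt_const; auto.
    + intros x Hx. apply cpt_mult; [apply cpt_const|]. apply continuity_integrand_vii_2; lra.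
    + intros x Hx. pose proof (viii_pointwise x Hn3 ltac:(lra)). rewrite <- Nat.sub_1_r. unfold C in *. lra.
  - rewrite (v_at_R A). pose proof (reference_weight_integral_le C a HC Haa).
    assert (0 <= v_of n u a * (/ INR n * D1 u a ^ n)).
    { apply Rmult_le_pos; [apply (v_nonneg A); lra|].
      apply Rmult_le_pos; [left; apply Rinv_0_lt_compat; lra|apply pow_le, (du_nonneg A); lra]. }
    assert (HpR : 0 <= D1 u Rr <= Pb) by (split; [apply (du_nonneg A)|apply HPb]; lra).
    assert (eps * (/ INR n * D1 u Rr ^ n) <= eps * Pb ^ n).
    { apply Rmult_le_compat_l; [lra|]. assert (D1 u Rr ^ n <= Pb ^ n) by (apply pow_incr; auto).
      assert (0 <= D1 u Rr ^ n) by (apply pow_le; lra).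
      assert (/ INR n <= 1) by (rewrite <- Rinv_1; apply Rinv_le_contravar; lra). nra. }
    assert (RInt (fun x => (INR n - 1) * integrand_vii_2 n u 1 x) a Rr
            <= (INR n - 1) * (INR n * bound_vii n Rr eps S1 BF 1)).
    { rewrite RInt_scal_cont; [|lra|intros; apply continuity_integrand_vii_2; lra].
      apply Rmult_le_compat_l; [lra|]. apply (RInt_vii_2_le 1 ltac:(lra) a Haa). }
    fold C. lra.
Qed.



End Estimates.

Lemma ix_pointwise {Rr eps f u u1 S1 BF} (A : admissible 2 Rr eps f u) (Rd : reference_bounds 2 Rr f u1 S1 BF)
  alpha x : alpha < 1 -> 0 < x <= Rr ->
  eps * integrand_ix_1 u alpha x + integrand_ix_2 u alpha x <=
  (1 - alpha) * Rpower x (1 - alpha - 1) * (v_of 2 u x * (/ 2 * D1 u x ^ 2)) +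
  Rpower x (1 - alpha) *
    (dv_of 2 u x * (/ 2 * D1 u x ^ 2) + v_of 2 u x * (/ 2 * (2 * D2 u x * D1 u x)))
  + integrand_vii_2 2 u alpha x
  + BF * Rpower Rr (1 - alpha) / eps * (S1 ^ 2 * Rr - dv_of 2 u1 x).
Proof.
  intros Ha Hx. admissible_facts A.
  assert (Ha' : alpha < INR 2 - 1) by (simpl; lra).
  set (C := BF * Rpower Rr (1 - alpha) / eps).
  unfold integrand_ix_1, integrand_ix_2, integrand_vii_2.
  set (v := v_of 2 u x). set (p := D1 u x). set (V := dv_of 2 u x). set (Q := first_integral 2 eps u x).
  pose proof (scaled_dv_eq 2 eps u x) as E. fold V p Q in E.
  assert (HQ0 : 0 <= Q) by (apply (first_integral_nonneg A); lra).
  assert (HK := first_integral_sq_weight_le A Rd alpha x Ha' ltac:(lra)). fold Q in HK.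
  assert (Hv0 : 0 <= v) by (apply (v_nonneg A); lra).
  assert (Hp0 : 0 <= p) by (apply (du_nonneg A); lra).
  set (Ax := Rpower x (- alpha)).
  assert (HA : 0 < Ax) by apply Rpower_pos.
  assert (R1 : Rpower x (1 - alpha) = Ax * x).
  { unfold Ax. replace (1 - alpha) with (- alpha + 1) by ring. rewrite Rpower_plus, Rpower_1 by lra. ring. }
  assert (R2 : Rpower x (2 - alpha) = Ax * x * x).
  { unfold Ax. replace (2 - alpha) with (- alpha + 1 + 1) by ring. rewrite !Rpower_plus, Rpower_1 by lra. ring. }
  assert (R3 : Rpower x (1 - alpha - 1) = Ax) by (unfold Ax; f_equal; ring).
  assert (R4 : Rpower x (2 - INR 2 - alpha) = Ax) by (unfold Ax; f_equal; simpl; ring).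
  assert (R5 : Rpower Rr (INR 2 - 1 - alpha) = Rpower Rr (1 - alpha)) by (f_equal; simpl; ring).
  rewrite R4, R5 in HK.
  rewrite R1, R2, R3. rewrite !pow2_abs.
  assert (Hq : D2 u x = v - (INR 2 - 1) / x * p) by (unfold v, v_of; fold p; ring).
  rewrite Hq.
  simpl (2 - 1)%nat in E.
  replace (INR 2) with 2 in * by (simpl; ring).
  assert (HV : V = (p ^ 2 / 2 - Q) / (eps * x)).
  { rewrite <- E. field. split; lra. }
  assert (HAVQ : - (Ax * x * V * Q) <= C * (S1 ^ 2 * Rr - dv_of 2 u1 x)).
  { rewrite HV. unfold C.
    replace (- (Ax * x * ((p ^ 2 / 2 - Q) / (eps * x)) * Q)) with
      (Ax * Q ^ 2 / eps - Ax * (p ^ 2 / 2) * Q / eps) by (field; lra).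
    assert (0 <= Ax * (p ^ 2 / 2) * Q / eps).
    { apply Rdiv_le_0_compat; [|lra]. apply Rmult_le_pos; [apply Rmult_le_pos|]; try lra. 
      apply Rdiv_le_0_compat; [apply pow2_ge_0|lra]. }
    assert (Ax * Q ^ 2 / eps <= BF * Rpower Rr (1 - alpha) * (S1 ^ 2 * Rr - dv_of 2 u1 x) / eps).
    { unfold Rdiv. apply Rmult_le_compat_r; [left; apply Rinv_0_lt_compat; lra|auto]. }
    replace (BF * Rpower Rr (1 - alpha) / eps * (S1 ^ 2 * Rr - dv_of 2 u1 x)) with
      (BF * Rpower Rr (1 - alpha) * (S1 ^ 2 * Rr - dv_of 2 u1 x) / eps) by (field; lra).
    lra. }
  assert (Hb : (1 + alpha) / 2 * (Ax * p ^ 2 * v) <= Ax * p ^ 2 * v).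
  { assert (0 <= Ax * p ^ 2 * v) by (apply Rmult_le_pos; [apply Rmult_le_pos; [lra|apply pow2_ge_0]|lra]).
    nra. }
  assert (HepsV : eps * (Ax * x * x * V ^ 2) = Ax * x * V * (p ^ 2 / 2 - Q)).
  { rewrite <- E. ring. }
  assert (Heq : eps * (Ax * x * x * V ^ 2) + Ax * x * p * v ^ 2 =
    ((1 - alpha) * Ax * (v * (/ 2 * p ^ 2)) +
     Ax * x * (V * (/ 2 * p ^ 2) + v * (/ 2 * (2 * (v - (2 - 1) / x * p) * p))))
    + (1 + alpha) / 2 * (Ax * p ^ 2 * v) - Ax * x * V * Q).
  { rewrite HepsV. field. lra. }
  rewrite Heq. lra.
Qed.

Lemma RInt_ix_le {Rr eps f u u1 S1 BF} (A : admissible 2 Rr eps f u) (Rd : reference_bounds 2 Rr f u1 S1 BF)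
  Pb alpha : (forall x, 0 <= x <= Rr -> D1 u x <= Pb) -> alpha < 1 -> forall a, 0 < a < Rr ->
  eps * RInt (integrand_ix_1 u alpha) a Rr + RInt (integrand_ix_2 u alpha) a Rr <=
    eps * Rpower Rr (1 - alpha) * Pb ^ 2 + INR 2 * bound_vii 2 Rr eps S1 BF alpha
    + BF * Rpower Rr (1 - alpha) / eps * (S1 ^ 2 * Rr ^ 2 + INR 2 * S1).
Proof.
  intros HPb Ha a Haa. admissible_facts A.
  assert (Ha' : alpha < INR 2 - 1) by (simpl; lra).
  pose proof (ref_adm Rd) as A1.
  set (C := BF * Rpower Rr (1 - alpha) / eps).
  assert (HC : 0 <= C) by (unfold C; apply Rdiv_le_0_compat; [apply Rmult_le_pos; [apply (ref_BF Rd)|left; apply Rpower_pos]|lra]).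
  assert (Hc9a : forall x, a <= x <= Rr -> continuity_pt (integrand_ix_1 u alpha) x).
  { intros x Hx. unfold integrand_ix_1. apply cpt_mult; [apply cpt_Rpower; lra|apply cpt_pow, cpt_abs, (continuity_dv A x); lra]. }
  assert (Hc9b : forall x, a <= x <= Rr -> continuity_pt (integrand_ix_2 u alpha) x).
  { intros x Hx. unfold integrand_ix_2. apply cpt_mult; [apply cpt_mult; [apply cpt_Rpower; lra|apply (continuity_du A x); lra]|apply cpt_pow, cpt_abs, (continuity_v A x); lra]. }
  rewrite <- (Rmult_1_l (RInt (integrand_ix_2 u alpha) a Rr)).
  rewrite <- RInt_linear_comb; [|lra|auto|auto].
  eapply Rle_trans.
  - apply (RInt_le_antiderivative_plus _ (integrand_vii_2 2 u alpha)
      (fun x => Rpower x (1 - alpha) * (v_of 2 u x * (/ 2 * D1 u x ^ 2)) - C * v_of 2 u1 x)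
      (fun x => (1 - alpha) * Rpower x (1 - alpha - 1) * (v_of 2 u x * (/ 2 * D1 u x ^ 2))
                + Rpower x (1 - alpha) * (dv_of 2 u x * (/ 2 * D1 u x ^ 2) + v_of 2 u x * (/ 2 * (INR 2 * D2 u x * D1 u x ^ Init.Nat.pred 2)))
                - C * dv_of 2 u1 x)
      (C * (S1 ^ 2 * Rr)) a Rr); [lra| | | | |].
    + intros x Hx.
      pose proof (is_derive_Rpower x (1 - alpha) ltac:(lra)) as H0.
      pose proof (is_derive_v A x ltac:(lra)) as H1.
      pose proof (is_derive_pow (D1 u) 2 x _ (is_derive_du A x ltac:(lra))) as H2.
      pose proof (is_derive_scal _ x (/ 2) _ H2) as H2'.
      pose proof (is_derive_mult _ _ _ _ _ H1 H2' ltac:(intros; apply Rmult_comm)) as H3.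
      pose proof (is_derive_mult _ _ _ _ _ H0 H3 ltac:(intros; apply Rmult_comm)) as H4.
      pose proof (is_derive_scal _ x C _ (is_derive_v A1 x ltac:(lra))) as H5.
      pose proof (is_derive_minus _ _ _ _ _ H4 H5) as H6.
      refine (is_derive_eq _ _ _ _ H6 _). unfold scal, plus, mult, minus, opp; simpl; unfold mult, plus, opp; simpl. ring.
    + intros x Hx. pose proof (continuity_dv A x ltac:(lra)). pose proof (continuity_v A x ltac:(lra)).
      pose proof (continuity_du A x ltac:(lra)). pose proof (sol_continuous_2 A (x := x) ltac:(lra)).
      pose proof (continuity_dv A1 x ltac:(lra)).
      cont_tac; lra.
    + intros x Hx. apply cpt_plus; apply cpt_mult; try apply cpt_const; auto.
    + intros x Hx. apply (continuity_integrand_vii_2 A); lra.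
    + intros x Hx. pose proof (ix_pointwise A Rd alpha x Ha ltac:(lra)).
      replace (INR 2 * D2 u x * D1 u x ^ Init.Nat.pred 2) with (2 * D2 u x * D1 u x) by (simpl; ring).
      unfold C in *. lra.
  - rewrite (v_at_R A).
    pose proof (reference_weight_integral_le Rd C a HC Haa). simpl (INR 2) in *.
    assert (0 <= Rpower a (1 - alpha) * (v_of 2 u a * (/ 2 * D1 u a ^ 2))).
    { apply Rmult_le_pos; [left; apply Rpower_pos|]. apply Rmult_le_pos; [apply (v_nonneg A); lra|].
      apply Rmult_le_pos; [lra|apply pow2_ge_0]. }
    assert (HpR : 0 <= D1 u Rr <= Pb) by (split; [apply (du_nonneg A)|apply HPb]; lra).
    assert (Rpower Rr (1 - alpha) * (eps * (/ 2 * D1 u Rr ^ 2)) <= eps * Rpower Rr (1 - alpha) * Pb ^ 2).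
    { assert (0 < Rpower Rr (1 - alpha)) by apply Rpower_pos. assert (D1 u Rr ^ 2 <= Pb ^ 2) by (apply pow_incr; auto).
      pose proof (pow2_ge_0 (D1 u Rr)).
      replace (Rpower Rr (1 - alpha) * (eps * (/ 2 * D1 u Rr ^ 2)))
        with ((eps * Rpower Rr (1 - alpha)) * (/ 2 * D1 u Rr ^ 2)) by ring.
      apply Rmult_le_compat_l; [nra|lra]. }
    assert (RInt (integrand_vii_2 2 u alpha) a Rr <= INR 2 * bound_vii 2 Rr eps S1 BF alpha)
      by (apply (RInt_vii_2_le A Rd alpha Ha' a Haa)).
    simpl (INR 2) in *. fold C. lra.
Qed.


Lemma u_abs_le {n Rr eps f u} (A : admissible n Rr eps f u) Pb :
  (forall x, 0 <= x <= Rr -> D1 u x <= Pb) ->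
  forall x, 0 <= x <= Rr -> Rabs (u x) <= Rabs (u Rr) + Rr * Pb.
Proof.
  intros HPb x Hx. pose proof (adm_R A).
  assert (Hp : forall y, 0 <= y <= Rr -> 0 <= D1 u y <= Pb) by (split; [apply (du_nonneg A)|apply HPb]; lra).
  destruct (Req_dec x Rr) as [->|Hne].
  { pose proof (Hp Rr ltac:(lra)). assert (0 <= Rr * Pb) by nra. lra. }
  destruct (MVT_cor2 u (D1 u) x Rr) as [xi [Hxi1 Hxi2]]; [lra| |].
  { intros c Hc. apply is_derive_Reals, (is_derive_u A). lra. }
  pose proof (Hp xi ltac:(lra)).
  assert (0 <= D1 u xi * (Rr - x) <= Pb * Rr) by (split; [apply Rmult_le_pos|apply Rmult_le_compat]; lra).
  replace (u x) with (u Rr - D1 u xi * (Rr - x)) by lra.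
  eapply Rle_trans; [apply Rabs_triang|].
  rewrite Rabs_Ropp, (Rabs_pos_eq (D1 u xi * (Rr - x))) by lra. lra.
Qed.

Lemma inv_pow_le_uniform n Rr r0 x : 0 < r0 <= x -> x <= Rr ->
  / x ^ (n - 1) <= (1 + Rr) ^ ((n - 1) * (n - 2)) / r0 ^ ((n - 1) * (n - 1)).
Proof.
  intros Hr Hx.
  assert (H1 : 0 < r0 ^ (n - 1)) by (apply pow_lt; lra).
  assert (H2 : r0 ^ (n - 1) <= x ^ (n - 1)) by (apply pow_incr; lra).
  assert (H3 : 0 < r0 ^ ((n - 1) * (n - 2))) by (apply pow_lt; lra).
  assert (H4 : r0 ^ ((n - 1) * (n - 2)) <= (1 + Rr) ^ ((n - 1) * (n - 2))) by (apply pow_incr; lra).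
  destruct (Compare_dec.le_lt_dec n 1) as [Hn|Hn].
  - replace ((n - 1) * (n - 2))%nat with 0%nat by lia. replace ((n - 1) * (n - 1))%nat with 0%nat by lia.
    replace (n - 1)%nat with 0%nat by lia. simpl. lra.
  - replace (r0 ^ ((n - 1) * (n - 1))) with (r0 ^ (n - 1) * r0 ^ ((n - 1) * (n - 2)))
      by (rewrite <- pow_add; f_equal; destruct n as [|[|k]]; [lia|lia|]; simpl; lia).
    apply Rle_trans with (/ r0 ^ (n - 1)); [apply Rinv_le_contravar; lra|].
    unfold Rdiv. rewrite Rinv_mult.
    assert (0 < / r0 ^ (n - 1)) by (apply Rinv_0_lt_compat; lra).
    assert (1 <= (1 + Rr) ^ ((n - 1) * (n - 2)) * / r0 ^ ((n - 1) * (n - 2))).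
    { apply Rmult_le_reg_r with (r0 ^ ((n - 1) * (n - 2))); auto.
      rewrite Rmult_assoc, Rinv_l, Rmult_1_r; lra. }
    nra.
Qed.

Definition bound_vii_unif n Rr S1 BF alpha :=
  Rpower Rr (INR n - 1 - alpha) / 2 +
  BF * Rpower Rr (INR n - 1 - alpha) / (INR n - 1 - alpha) * (S1 ^ n * Rr ^ 2 + INR n * S1).

Lemma bound_vii_unif_nonneg n Rr S1 BF alpha : 0 <= S1 -> 0 <= BF -> alpha < INR n - 1 ->
  0 <= bound_vii_unif n Rr S1 BF alpha.
Proof.
  intros HS HB Ha. unfold bound_vii_unif.
  assert (0 < Rpower Rr (INR n - 1 - alpha)) by apply Rpower_pos.
  assert (0 <= S1 ^ n * Rr ^ 2 + INR n * S1).
  { apply Rplus_le_le_0_compat; [apply Rmult_le_pos; [apply pow_le; auto|apply pow2_ge_0]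
      |apply Rmult_le_pos; [apply pos_INR|auto]]. }
  apply Rplus_le_le_0_compat; [lra|]. apply Rmult_le_pos; auto.
  apply Rdiv_le_0_compat; [apply Rmult_le_pos; lra|lra].
Qed.

Lemma bound_vii_le n Rr eps S1 BF alpha : 0 < eps < 1 -> 0 <= S1 -> 0 <= BF -> alpha < INR n - 1 ->
  bound_vii n Rr eps S1 BF alpha <= bound_vii_unif n Rr S1 BF alpha / eps.
Proof.
  intros He HS HB Ha. unfold bound_vii, bound_vii_unif.
  set (X := Rpower Rr (INR n - 1 - alpha)). set (b := INR n - 1 - alpha).
  set (Y := S1 ^ n * Rr ^ 2 + INR n * S1).
  assert (HX : 0 < X) by apply Rpower_pos.
  assert (Hb : 0 < b) by (unfold b; lra).
  assert (He3 : eps ^ 3 <= / eps) by (apply pow_le_inv; lra).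
  assert (eps ^ 3 * X / 2 <= X / 2 / eps).
  { unfold Rdiv. replace (X * / 2 * / eps) with (/ eps * (X * / 2)) by ring.
    rewrite Rmult_assoc. apply Rmult_le_compat_r; lra. }
  replace (BF * X / (eps * b) * Y) with (BF * X / b * Y / eps) by (field; lra).
  replace ((X / 2 + BF * X / b * Y) / eps) with (X / 2 / eps + BF * X / b * Y / eps) by (field; lra).
  lra.
Qed.

(** * Uniform estimates *)

#[local] Set Implicit Arguments.

Record uniform_setting (n : nat) (Rr gR : R) (f : R -> R) (Pb eps : R) (u : R -> R) : Prop := {
  uni_adm :> admissible n Rr eps f u;
  uni_eps_lt_1 : eps < 1;
  uni_bc : u Rr = gR;
  uni_du_le : forall x, 0 <= x <= Rr -> D1 u x <= Pb }.

#[local] Unset Implicit Arguments.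

Section UniformEstimates.

Context {n : nat} {Rr gR : R} {f u1 : R -> R} {S1 BF : R} (Pb : R)
  (Rd : reference_bounds n Rr f u1 S1 BF) (HPb : 0 <= Pb).

Local Notation M := (first_integral n 1 u1 Rr).
Local Notation setting := (uniform_setting n Rr gR f Pb).

Lemma first_integral_ref_nonneg : 0 <= M.
Proof. apply (first_integral_nonneg (ref_adm Rd)). pose proof (adm_R (ref_adm Rd)). lra. Qed.

Lemma first_integral_at_R {eps u} (U : setting eps u) : first_integral n eps u Rr = M.
Proof. apply (first_integral_ref U Rd). pose proof (adm_R U). lra. Qed.

Lemma du_range {eps u} (U : setting eps u) x : 0 <= x <= Rr -> 0 <= D1 u x <= Pb.
Proof. intros Hx. split; [apply (du_nonneg U) | apply (uni_du_le U)]; auto. Qed.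

Lemma estimate_i : exists C0, 0 < C0 /\ forall eps u, setting eps u ->
  exists I, integral_eq (fun r => Rabs (Derive u r) ^ n) 0 Rr I /\
    forall x, 0 <= x <= Rr -> Rabs (u x) + I <= C0.
Proof.
  exists (Rabs gR + Rr * Pb + Rr * Pb ^ n + 1).
  pose proof (adm_R (ref_adm Rd)) as HR. pose proof (Rabs_pos gR).
  assert (0 <= Pb ^ n) by (apply pow_le; lra).
  split; [nra|]. intros eps u U.
  assert (Hc : forall x, 0 < x <= Rr -> continuity_pt (fun r => Rabs (D1 u r) ^ n) x)
    by (intros x Hx; apply cpt_pow, cpt_abs, (continuity_du U); lra).
  destruct (improper_integral_bound (fun r => Rabs (D1 u r) ^ n) Rr (Rr * Pb ^ n) HR Hc)
    as [I [HI HIb]].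
  - intros x Hx. apply pow_le, Rabs_pos.
  - intros a Ha. apply Rle_trans with ((Rr - a) * Pb ^ n); [|apply Rmult_le_compat_r; lra].
    apply RInt_le_const; [lra| intros; apply Hc; lra|].
    intros x Hx. rewrite Rabs_pos_eq by (apply pow_le, Rabs_pos).
    pose proof (du_range U x ltac:(lra)). rewrite Rabs_pos_eq by lra. apply pow_incr; lra.
  - exists I. split; [exact HI|]. intros x Hx.
    pose proof (u_abs_le U Pb (uni_du_le U) x Hx) as Hu. rewrite (uni_bc U) in Hu. lra.
Qed.

Lemma estimate_ii : exists C1, 0 < C1 /\ forall eps u, setting eps u ->
  forall x y z, 0 <= x <= Rr -> 0 <= y <= Rr -> 0 <= z <= Rr ->
    Rabs (u x) + Rabs (Derive u y) + Rabs (w_of n u z) <= C1.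
Proof.
  exists (Rabs gR + Rr * Pb + Pb + Rr ^ (n - 1) * Pb + 1).
  pose proof (adm_R (ref_adm Rd)) as HR. pose proof (Rabs_pos gR).
  assert (0 < Rr ^ (n - 1)) by (apply pow_lt; lra).
  split; [nra|]. intros eps u U x y z Hx Hy Hz.
  pose proof (u_abs_le U Pb (uni_du_le U) x Hx) as Hu. rewrite (uni_bc U) in Hu.
  pose proof (du_range U y Hy). pose proof (du_range U z Hz).
  rewrite (Rabs_pos_eq (D1 u y)) by lra. unfold w_of.
  rewrite (Rabs_pos_eq (z ^ (n - 1) * D1 u z)) by (apply Rmult_le_pos; [apply pow_le|]; lra).
  assert (z ^ (n - 1) * D1 u z <= Rr ^ (n - 1) * Pb)
    by (apply Rmult_le_compat; [apply pow_le; lra|lra|apply pow_incr; lra|lra]).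
  lra.
Qed.

Lemma estimate_iii : exists C2, 0 < C2 /\ forall eps u, setting eps u ->
  forall x, 0 <= x <= Rr -> Rabs (Derive (w_of n u) x) <= C2 / eps.
Proof.
  exists (Rr ^ (n - 1) + M * Rr + 1).
  pose proof (adm_R (ref_adm Rd)) as HR0. pose proof first_integral_ref_nonneg.
  assert (0 <= M * Rr) by (apply Rmult_le_pos; lra).
  assert (0 < Rr ^ (n - 1)) by (apply pow_lt; lra).
  split; [nra|]. intros eps u U x Hx. admissible_facts U. pose proof (uni_eps_lt_1 U).
  rewrite (is_derive_unique _ _ _ (is_derive_w U x Hn Hx)).
  assert (Hie : 0 < / eps) by (apply Rinv_0_lt_compat; lra).
  destruct (Req_dec x 0) as [->|Hx0].
  { unfold dw_of. rewrite (sol_du_0 U), (pow_i (n - 1)) by lia.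
    replace (INR (n - 1) * 0 ^ (n - 1 - 1) * 0 + 0 * D2 u 0) with 0 by ring.
    rewrite Rabs_R0. apply Rdiv_le_0_compat; lra. }
  rewrite dw_of_eq by (auto; lra).
  assert (Hxn : 0 < x ^ (n - 1)) by (apply pow_lt; lra).
  rewrite Rabs_pos_eq by (apply Rmult_le_pos; [lra|apply (v_nonneg U); lra]).
  pose proof (v_upper U x ltac:(lra)) as Hvu. rewrite (first_integral_at_R U) in Hvu.
  assert (x ^ (n - 1) * v_of n u x <= eps * x ^ (n - 1) + M * (Rr - x) / eps).
  { apply Rle_trans with (x ^ (n - 1) * (eps + M * (Rr - x) / (eps * x ^ (n - 1)))).
    - apply Rmult_le_compat_l; lra.
    - right. field. split; lra. }
  assert (eps * x ^ (n - 1) <= Rr ^ (n - 1) / eps).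
  { assert (x ^ (n - 1) <= Rr ^ (n - 1)) by (apply pow_incr; lra).
    pose proof (le_inv_of_lt_one eps ltac:(lra)).
    apply Rle_trans with (/ eps * Rr ^ (n - 1)); [apply Rmult_le_compat; lra|]. unfold Rdiv; lra. }
  assert (M * (Rr - x) / eps <= M * Rr / eps).
  { unfold Rdiv. apply Rmult_le_compat_r; [lra|]. apply Rmult_le_compat_l; lra. }
  unfold Rdiv in *. nra.
Qed.

Lemma estimate_iv : exists C3, 0 < C3 /\ forall eps u, setting eps u ->
  forall r0, 0 < r0 <= Rr -> forall x, r0 <= x <= Rr ->
    Rabs (v_of n u x) <= C3 / (eps * r0 ^ (n - 1)).
Proof.
  exists (Rr ^ (n - 1) + M * Rr + 1).
  pose proof (adm_R (ref_adm Rd)) as HR0. pose proof first_integral_ref_nonneg.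
  assert (0 <= M * Rr) by (apply Rmult_le_pos; lra).
  assert (0 < Rr ^ (n - 1)) by (apply pow_lt; lra).
  split; [nra|]. intros eps u U r0 Hr0 x Hx. admissible_facts U. pose proof (uni_eps_lt_1 U).
  rewrite Rabs_pos_eq by (apply (v_nonneg U); lra).
  pose proof (v_upper U x ltac:(lra)) as Hvu. rewrite (first_integral_at_R U) in Hvu.
  assert (Hr0n : 0 < r0 ^ (n - 1)) by (apply pow_lt; lra).
  assert (Hxr : r0 ^ (n - 1) <= x ^ (n - 1)) by (apply pow_incr; lra).
  assert (HrR : r0 ^ (n - 1) <= Rr ^ (n - 1)) by (apply pow_incr; lra).
  assert (Hep : 0 < eps * r0 ^ (n - 1)) by nra.
  assert (Hi : 0 < / (eps * r0 ^ (n - 1))) by (apply Rinv_0_lt_compat; lra).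
  assert (T1 : eps <= Rr ^ (n - 1) / (eps * r0 ^ (n - 1))).
  { apply Rmult_le_reg_r with (eps * r0 ^ (n - 1)); auto.
    unfold Rdiv. rewrite Rmult_assoc, Rinv_l, Rmult_1_r by lra. nra. }
  assert (T2 : M * (Rr - x) / (eps * x ^ (n - 1)) <= M * Rr / (eps * r0 ^ (n - 1))).
  { unfold Rdiv. apply Rmult_le_compat; [nra|left; apply Rinv_0_lt_compat; nra|nra|].
    apply Rinv_le_contravar; nra. }
  unfold Rdiv in *. nra.
Qed.

Lemma estimate_v : exists C4, 0 < C4 /\ forall eps u, setting eps u ->
  forall r0, 0 < r0 <= Rr -> forall x, r0 <= x <= Rr ->
    Rabs (Derive (v_of n u) x) <= C4 / (eps * r0 ^ ((n - 1) * (n - 1))).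
Proof.
  exists ((Pb ^ n + M + 1) * (1 + Rr) ^ ((n - 1) * (n - 2))).
  pose proof (adm_R (ref_adm Rd)) as HR0. pose proof first_integral_ref_nonneg.
  assert (0 <= Pb ^ n) by (apply pow_le; lra).
  assert (HK : 0 < (1 + Rr) ^ ((n - 1) * (n - 2))) by (apply pow_lt; lra).
  split; [apply Rmult_lt_0_compat; lra|]. intros eps u U r0 Hr0 x Hx. pose proof (adm_eps U).
  rewrite (is_derive_unique _ _ _ (is_derive_v U x ltac:(lra))).
  pose proof (dv_abs_le U Pb (uni_du_le U) x ltac:(lra)) as HV. rewrite (first_integral_at_R U) in HV.
  pose proof (inv_pow_le_uniform n Rr r0 x ltac:(lra) ltac:(lra)) as Hc.
  assert (Hxn : 0 < x ^ (n - 1)) by (apply pow_lt; lra).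
  assert (Hr0n : 0 < r0 ^ ((n - 1) * (n - 1))) by (apply pow_lt; lra).
  eapply Rle_trans; [exact HV|].
  replace ((Pb ^ n + M) / (eps * x ^ (n - 1))) with ((Pb ^ n + M) / eps * / x ^ (n - 1)) by (field; lra).
  replace ((Pb ^ n + M + 1) * (1 + Rr) ^ ((n - 1) * (n - 2)) / (eps * r0 ^ ((n - 1) * (n - 1))))
    with ((Pb ^ n + M + 1) / eps * ((1 + Rr) ^ ((n - 1) * (n - 2)) / r0 ^ ((n - 1) * (n - 1)))) by (field; lra).
  assert (0 < / x ^ (n - 1)) by (apply Rinv_0_lt_compat; lra).
  apply Rmult_le_compat; [apply Rdiv_le_0_compat; lra|lra| |auto].
  unfold Rdiv. apply Rmult_le_compat_r; [left; apply Rinv_0_lt_compat; lra|lra].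
Qed.

Lemma estimate_vi : exists C5, 0 < C5 /\ forall eps u, setting eps u ->
  exists I1 I2,
    integral_eq (fun r => Rabs (Derive (w_of n u) r) ^ 2) 0 Rr I1 /\
    integral_eq (fun r => r ^ (2 * (n - 1)) * Rabs (v_of n u r) ^ 2) 0 Rr I2 /\
    I1 + I2 <= C5 / eps.
Proof.
  set (K := Rr ^ (n - 1) * (Rr ^ (n - 1) * Pb) + Rr ^ (n - 1) * M * Pb * Rr).
  exists (2 * K + 1).
  pose proof (adm_R (ref_adm Rd)) as HR0. pose proof first_integral_ref_nonneg.
  assert (HRn : 0 < Rr ^ (n - 1)) by (apply pow_lt; lra).
  assert (HK : 0 <= K) by (unfold K; assert (0 <= Rr ^ (n - 1) * M * Pb) by
    (apply Rmult_le_pos; [apply Rmult_le_pos|]; lra); nra).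
  split; [lra|]. intros eps u U. admissible_facts U. pose proof (uni_eps_lt_1 U).
  set (h := fun x => x ^ (2 * (n - 1)) * Rabs (v_of n u x) ^ 2).
  destruct (improper_integral_bound h Rr (K / eps) HR0) as [I [HI HIb]].
  - intros x Hx. unfold h. apply cpt_mult; [apply cpt_pow, cpt_id|apply cpt_pow, cpt_abs, (continuity_v U x); lra].
  - intros x Hx. unfold h. apply Rmult_le_pos; [apply pow_le; lra|apply pow_le, Rabs_pos].
  - intros a Ha. eapply Rle_trans; [apply (RInt_weighted_v_sq_le U Pb (uni_du_le U) a Ha)|].
    rewrite (first_integral_at_R U). pose proof (le_inv_of_lt_one eps ltac:(lra)).
    assert (0 <= Rr ^ (n - 1) * (Rr ^ (n - 1) * Pb)) by (apply Rmult_le_pos; nra).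
    unfold K, Rdiv. nra.
  - exists I, I. split; [|split; [exact HI|]].
    + apply (is_RInt_gen_ext_open h); auto. intros x Hx. unfold h.
      rewrite (is_derive_unique _ _ _ (is_derive_w U x Hn ltac:(lra))), dw_of_eq by (auto; lra).
      rewrite !pow2_abs, Rpow_mult_distr, <- pow_mult. do 2 f_equal. lia.
    + unfold Rdiv in *. assert (0 < / eps) by (apply Rinv_0_lt_compat; lra). nra.
Qed.

Lemma estimate_vii alpha : alpha < INR n - 1 -> exists C6, 0 < C6 /\ forall eps u, setting eps u ->
  exists I1 I2,
    integral_eq (fun r => Rpower r (INR n - 2 - alpha) * Rabs (v_of n u r) ^ 2) 0 Rr I1 /\
    integral_eq (fun r => Rpower r (- alpha) * Derive u r ^ n * v_of n u r) 0 Rr I2 /\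
    eps * I1 + I2 <= C6 / eps.
Proof.
  intros Ha. set (beta := INR n - 1 - alpha).
  assert (Hb : 0 < beta) by (unfold beta; lra).
  pose proof (bound_vii_unif_nonneg n Rr S1 BF alpha (ref_S1 Rd) (ref_BF Rd) Ha) as HBu.
  assert (Hcoef : 0 < INR n + 4 / beta) by (assert (0 < 4 / beta) by (apply Rdiv_lt_0_compat; lra);
    pose proof (pos_INR n); lra).
  exists ((INR n + 4 / beta) * bound_vii_unif n Rr S1 BF alpha + 1). split; [nra|].
  intros eps u U. admissible_facts U. pose proof (uni_eps_lt_1 U).
  set (B := bound_vii n Rr eps S1 BF alpha).
  destruct (improper_integral_pair (integrand_vii_1 n u alpha) (integrand_vii_2 n u alpha)
    (eps * beta / 4) (/ INR n) Rr B HR) as [I1 [I2 [HI1 [HI2 [HI1p [HI2p HIB]]]]]].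
  - apply Rdiv_lt_0_compat; [apply Rmult_lt_0_compat|]; lra.
  - apply Rinv_0_lt_compat; lra.
  - apply (continuity_integrand_vii_1 U).
  - apply (continuity_integrand_vii_2 U).
  - intros; apply integrand_vii_1_nonneg.
  - apply (integrand_vii_2_nonneg U).
  - intros a Haa. pose proof (RInt_vii_le U Rd alpha Ha a Haa). fold beta B in H0. lra.
  - exists I1, I2. split; [exact HI1|]. split; [exact HI2|].
    pose proof (bound_vii_le n Rr eps S1 BF alpha ltac:(lra) (ref_S1 Rd) (ref_BF Rd) Ha) as HB7.
    fold B in HB7.
    assert (eps * I1 <= 4 / beta * B).
    { replace (eps * I1) with (4 / beta * (eps * beta / 4 * I1)) by (field; lra).
      apply Rmult_le_compat_l; [left; apply Rdiv_lt_0_compat; lra|].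
      assert (0 <= / INR n * I2) by (apply Rmult_le_pos; [left; apply Rinv_0_lt_compat|]; lra). lra. }
    assert (I2 <= INR n * B).
    { replace I2 with (INR n * (/ INR n * I2)) by (field; lra).
      apply Rmult_le_compat_l; [lra|].
      assert (0 <= eps * beta / 4 * I1) by (apply Rmult_le_pos; [apply Rdiv_le_0_compat; nra|]; lra). lra. }
    assert (Hie : 0 < / eps) by (apply Rinv_0_lt_compat; lra).
    assert ((INR n + 4 / beta) * B <= (INR n + 4 / beta) * (bound_vii_unif n Rr S1 BF alpha / eps))
      by (apply Rmult_le_compat_l; lra).
    unfold Rdiv in *. nra.
Qed.

Lemma estimate_viii : exists C7, 0 < C7 /\ forall eps u, setting eps u -> (3 <= n)%nat ->
  exists I1 I2,
    integral_eq (fun r => r ^ (n - 1) * Rabs (Derive (v_of n u) r) ^ 2) 0 Rr I1 /\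
    integral_eq (fun r => Derive u r ^ (n - 1) * Rabs (v_of n u r) ^ 2) 0 Rr I2 /\
    eps * I1 + I2 <= C7 / eps.
Proof.
  set (Y := S1 ^ n * Rr ^ 2 + INR n * S1).
  set (Bu := Rabs (bound_vii_unif n Rr S1 BF 1)).
  pose proof (adm_R (ref_adm Rd)) as HR0. pose proof (INR_n_ge_2 (ref_adm Rd)) as HnR0.
  pose proof (ref_S1 Rd). pose proof (ref_BF Rd).
  assert (HY : 0 <= Y) by (unfold Y; assert (0 <= S1 ^ n) by (apply pow_le; lra);
    apply Rplus_le_le_0_compat; [apply Rmult_le_pos; [|apply pow2_ge_0]|apply Rmult_le_pos]; lra).
  assert (HBFY : 0 <= BF * Rpower Rr (INR n - 2) * Y)
    by (apply Rmult_le_pos; [apply Rmult_le_pos; [|left; apply Rpower_pos]|]; lra).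
  assert (HBu : 0 <= (INR n - 1) * (INR n * Bu)) by (apply Rmult_le_pos; [|apply Rmult_le_pos; [|apply Rabs_pos]]; lra).
  assert (0 <= Pb ^ n) by (apply pow_le; lra).
  exists (Pb ^ n + (INR n - 1) * (INR n * Bu) + BF * Rpower Rr (INR n - 2) * Y + 1). split; [lra|].
  intros eps u U Hn3. admissible_facts U. pose proof (uni_eps_lt_1 U).
  assert (Ha1 : 1 < INR n - 1) by (assert (H3 : INR 3 <= INR n) by (apply le_INR; lia); simpl in H3; lra).
  set (B := eps * Pb ^ n + (INR n - 1) * (INR n * bound_vii n Rr eps S1 BF 1)
            + BF * Rpower Rr (INR n - 2) / eps * Y).
  destruct (improper_integral_pair (integrand_viii_1 n u) (integrand_viii_2 n u) eps 1 Rr B HR He)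
    as [I1 [I2 [HI1 [HI2 [HI1p [HI2p HIB]]]]]]; [lra| | | | | |].
  - intros x Hx. unfold integrand_viii_1.
    apply cpt_mult; [apply cpt_pow, cpt_id|apply cpt_pow, cpt_abs, (continuity_dv U x); lra].
  - intros x Hx. unfold integrand_viii_2.
    apply cpt_mult; [apply cpt_pow, (continuity_du U x); lra|apply cpt_pow, cpt_abs, (continuity_v U x); lra].
  - intros x Hx. unfold integrand_viii_1. apply Rmult_le_pos; [apply pow_le; lra|apply pow_le, Rabs_pos].
  - intros x Hx. unfold integrand_viii_2. apply Rmult_le_pos; [apply pow_le, (du_nonneg U); lra|apply pow_le, Rabs_pos].
  - intros a Ha. rewrite Rmult_1_l. exact (RInt_viii_le U Rd Pb Hn3 (uni_du_le U) a Ha).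
  - exists I1, I2. split; [|split; [exact HI2|]].
    + apply (is_RInt_gen_ext_open (integrand_viii_1 n u)); auto. intros x Hx. unfold integrand_viii_1.
      rewrite (is_derive_unique _ _ _ (is_derive_v U x ltac:(lra))). reflexivity.
    + eapply Rle_trans; [rewrite Rmult_1_l in HIB; exact HIB|]. unfold B.
      pose proof (bound_vii_le n Rr eps S1 BF 1 ltac:(lra) (ref_S1 Rd) (ref_BF Rd) Ha1) as HB7.
      assert (bound_vii n Rr eps S1 BF 1 <= Bu / eps).
      { eapply Rle_trans; [exact HB7|]. unfold Rdiv.
        apply Rmult_le_compat_r; [left; apply Rinv_0_lt_compat; lra|apply Rle_abs]. }
      assert (Hie : 0 < / eps) by (apply Rinv_0_lt_compat; lra).
      assert (eps * Pb ^ n <= Pb ^ n / eps) by (pose proof (le_inv_of_lt_one eps ltac:(lra)); unfold Rdiv; nra).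
      assert ((INR n - 1) * (INR n * bound_vii n Rr eps S1 BF 1) <= (INR n - 1) * (INR n * Bu) / eps).
      { unfold Rdiv. rewrite !Rmult_assoc. apply Rmult_le_compat_l; [lra|].
        apply Rmult_le_compat_l; [lra|]. exact H3. }
      replace (BF * Rpower Rr (INR n - 2) / eps * Y) with (BF * Rpower Rr (INR n - 2) * Y / eps) by (field; lra).
      unfold Rdiv in *. nra.
Qed.

End UniformEstimates.

Lemma estimate_ix {Rr gR f u1 S1 BF} Pb (Rd : reference_bounds 2 Rr f u1 S1 BF) (HPb : 0 <= Pb) alpha :
  alpha < 1 -> exists C8, 0 < C8 /\ forall eps u, uniform_setting 2 Rr gR f Pb eps u ->
  exists I1 I2,
    integral_eq (fun r => Rpower r (2 - alpha) * Rabs (Derive (v_of 2 u) r) ^ 2) 0 Rr I1 /\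
    integral_eq (fun r => Rpower r (1 - alpha) * Derive u r * Rabs (v_of 2 u r) ^ 2) 0 Rr I2 /\
    eps * I1 + I2 <= C8 / eps.
Proof.
  intros Ha. set (Y := S1 ^ 2 * Rr ^ 2 + INR 2 * S1).
  assert (Ha' : alpha < INR 2 - 1) by (simpl; lra).
  pose proof (ref_S1 Rd). pose proof (ref_BF Rd).
  pose proof (bound_vii_unif_nonneg 2 Rr S1 BF alpha (ref_S1 Rd) (ref_BF Rd) Ha') as HB7c.
  assert (HX : 0 < Rpower Rr (1 - alpha)) by apply Rpower_pos.
  assert (HY : 0 <= Y) by (unfold Y; simpl; nra).
  assert (HBX : 0 <= BF * Rpower Rr (1 - alpha) * Y) by (apply Rmult_le_pos; [apply Rmult_le_pos|]; lra).
  assert (HP2 : 0 <= Pb ^ 2) by apply pow2_ge_0.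
  exists (Rpower Rr (1 - alpha) * Pb ^ 2 + INR 2 * bound_vii_unif 2 Rr S1 BF alpha
          + BF * Rpower Rr (1 - alpha) * Y + 1).
  split; [simpl; nra|]. intros eps u U. admissible_facts U. pose proof (uni_eps_lt_1 U).
  set (B := eps * Rpower Rr (1 - alpha) * Pb ^ 2 + INR 2 * bound_vii 2 Rr eps S1 BF alpha
            + BF * Rpower Rr (1 - alpha) / eps * Y).
  destruct (improper_integral_pair (integrand_ix_1 u alpha) (integrand_ix_2 u alpha) eps 1 Rr B HR He)
    as [I1 [I2 [HI1 [HI2 [HI1p [HI2p HIB]]]]]]; [lra| | | | | |].
  - intros x Hx. unfold integrand_ix_1.
    apply cpt_mult; [apply cpt_Rpower; lra|apply cpt_pow, cpt_abs, (continuity_dv U x); lra].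
  - intros x Hx. unfold integrand_ix_2. apply cpt_mult;
      [apply cpt_mult; [apply cpt_Rpower; lra|apply (continuity_du U x); lra]|apply cpt_pow, cpt_abs, (continuity_v U x); lra].
  - intros x Hx. unfold integrand_ix_1. apply Rmult_le_pos; [left; apply Rpower_pos|apply pow_le, Rabs_pos].
  - intros x Hx. unfold integrand_ix_2.
    apply Rmult_le_pos; [apply Rmult_le_pos; [left; apply Rpower_pos|apply (du_nonneg U); lra]|apply pow_le, Rabs_pos].
  - intros a Haa. rewrite Rmult_1_l. exact (RInt_ix_le U Rd Pb alpha (uni_du_le U) Ha a Haa).
  - exists I1, I2. split; [|split; [exact HI2|]].
    + apply (is_RInt_gen_ext_open (integrand_ix_1 u alpha)); auto. intros x Hx. unfold integrand_ix_1.
      rewrite (is_derive_unique _ _ _ (is_derive_v U x ltac:(lra))). reflexivity.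
    + eapply Rle_trans; [rewrite Rmult_1_l in HIB; exact HIB|]. unfold B.
      pose proof (bound_vii_le 2 Rr eps S1 BF alpha ltac:(lra) (ref_S1 Rd) (ref_BF Rd) Ha') as HB7.
      assert (Hie : 0 < / eps) by (apply Rinv_0_lt_compat; lra).
      assert (eps * Rpower Rr (1 - alpha) * Pb ^ 2 <= Rpower Rr (1 - alpha) * Pb ^ 2 / eps).
      { pose proof (le_inv_of_lt_one eps ltac:(lra)). unfold Rdiv.
        assert (0 <= Rpower Rr (1 - alpha) * Pb ^ 2) by (apply Rmult_le_pos; lra).
        replace (eps * Rpower Rr (1 - alpha) * Pb ^ 2) with (eps * (Rpower Rr (1 - alpha) * Pb ^ 2)) by ring.
        nra. }
      assert (INR 2 * bound_vii 2 Rr eps S1 BF alpha <= INR 2 * bound_vii_unif 2 Rr S1 BF alpha / eps).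
      { unfold Rdiv. rewrite Rmult_assoc. apply Rmult_le_compat_l; [apply pos_INR|exact HB7]. }
      replace (BF * Rpower Rr (1 - alpha) / eps * Y) with (BF * Rpower Rr (1 - alpha) * Y / eps) by (field; lra).
      unfold Rdiv in *. nra.
Qed.

Lemma admissible_family n Rr gR f (u : R -> R -> R) : (2 <= n)%nat -> 0 < Rr ->
  (forall r, 0 < r < Rr -> 0 <= f r) ->
  (forall eps, 0 < eps -> classical_solution n Rr gR eps f (u eps) /\ mono_incr_on Rr (u eps)) ->
  forall eps, 0 < eps -> admissible n Rr eps f (u eps).
Proof.
  intros Hn HR Hf Hsol eps He. destruct (Hsol eps He) as [Hc Hm].
  constructor; auto. exact (regular_of_classical n Rr gR eps f (u eps) Hc).
Qed.

Lemma uniform_setting_family n Rr gR f (u : R -> R -> R) S1 BF : (2 <= n)%nat -> 0 < Rr ->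
  (forall r, 0 < r < Rr -> 0 <= f r) ->
  (forall eps, 0 < eps -> classical_solution n Rr gR eps f (u eps) /\ mono_incr_on Rr (u eps)) ->
  reference_bounds n Rr f (u 1) S1 BF ->
  forall eps, 0 < eps < 1 ->
    uniform_setting n Rr gR f (1 + INR n * first_integral n 1 (u 1) Rr + Rr) eps (u eps).
Proof.
  intros Hn HR Hf Hsol Rd eps He.
  pose proof (admissible_family n Rr gR f u Hn HR Hf Hsol eps (proj1 He)) as A.
  constructor; [exact A | lra | |].
  - destruct (Hsol eps (proj1 He)) as [[_ [_ [_ [_ [HuR _]]]]] _]. exact HuR.
  - intros x Hx. pose proof (du_le A x Hx) as Hle.
    rewrite (first_integral_ref A Rd) in Hle by lra. nra.
Qed.

Theorem theorem3p11
  (n : nat) (Rr gR : R) (f : R -> R) (u : R -> R -> R)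
  (Hn : (2 <= n)%nat) (HR : 0 < Rr)
  (Hfc : forall r, 0 < r < Rr -> continuous f r)
  (Hfpos : forall r, 0 < r < Rr -> 0 <= f r)
  (Hfnz : exists r, 0 < r < Rr /\ f r <> 0)
  (Hsol : forall eps, 0 < eps ->
     classical_solution n Rr gR eps f (u eps) /\ mono_incr_on Rr (u eps)) :
  exists eps0 : R, 0 < eps0 /\
  exists C0 C1 C2 C3 C4 C5 C7 : R,
    0 < C0 /\ 0 < C1 /\ 0 < C2 /\ 0 < C3 /\ 0 < C4 /\ 0 < C5 /\ 0 < C7 /\
    (forall eps, 0 < eps < eps0 ->
      (* (i) *)
      (exists I, integral_eq (fun r => Rabs (Derive (u eps) r) ^ n) 0 Rr I /\
         forall x, 0 <= x <= Rr -> Rabs (u eps x) + I <= C0) /\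
      (* (ii) *)
      (forall x y z, 0 <= x <= Rr -> 0 <= y <= Rr -> 0 <= z <= Rr ->
         Rabs (u eps x) + Rabs (Derive (u eps) y) + Rabs (w_of n (u eps) z) <= C1) /\
      (* (iii) *)
      (forall x, 0 <= x <= Rr -> Rabs (Derive (w_of n (u eps)) x) <= C2 / eps) /\
      (* (iv) *)
      (forall r0, 0 < r0 <= Rr -> forall x, r0 <= x <= Rr ->
         Rabs (v_of n (u eps) x) <= C3 / (eps * r0 ^ (n - 1))) /\
      (* (v) *)
      (forall r0, 0 < r0 <= Rr -> forall x, r0 <= x <= Rr ->
         Rabs (Derive (v_of n (u eps)) x) <= C4 / (eps * r0 ^ ((n - 1) * (n - 1)))) /\
      (* (vi) *)
      (exists I1 I2,
         integral_eq (fun r => Rabs (Derive (w_of n (u eps)) r) ^ 2) 0 Rr I1 /\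
         integral_eq (fun r => r ^ (2 * (n - 1)) * Rabs (v_of n (u eps) r) ^ 2) 0 Rr I2 /\
         I1 + I2 <= C5 / eps) /\
      (* (viii) *)
      ((3 <= n)%nat ->
        exists I1 I2,
         integral_eq (fun r => r ^ (n - 1) * Rabs (Derive (v_of n (u eps)) r) ^ 2) 0 Rr I1 /\
         integral_eq (fun r => Derive (u eps) r ^ (n - 1) * Rabs (v_of n (u eps) r) ^ 2) 0 Rr I2 /\
         eps * I1 + I2 <= C7 / eps)) /\
    (* (vii) *)
    (forall alpha, alpha < INR n - 1 ->
      exists C6, 0 < C6 /\
      forall eps, 0 < eps < eps0 ->
        exists I1 I2,
         integral_eq (fun r => Rpower r (INR n - 2 - alpha) * Rabs (v_of n (u eps) r) ^ 2) 0 Rr I1 /\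
         integral_eq (fun r => Rpower r (- alpha) * Derive (u eps) r ^ n * v_of n (u eps) r) 0 Rr I2 /\
         eps * I1 + I2 <= C6 / eps) /\
    (* (ix) *)
    (n = 2%nat -> forall alpha, alpha < 1 ->
      exists C8, 0 < C8 /\
      forall eps, 0 < eps < eps0 ->
        exists I1 I2,
         integral_eq (fun r => Rpower r (2 - alpha) * Rabs (Derive (v_of n (u eps)) r) ^ 2) 0 Rr I1 /\
         integral_eq (fun r => Rpower r (1 - alpha) * Derive (u eps) r * Rabs (v_of n (u eps) r) ^ 2) 0 Rr I2 /\
         eps * I1 + I2 <= C8 / eps).
Proof.
  pose proof (admissible_family n Rr gR f u Hn HR Hfpos Hsol) as Adm.
  destruct (reference_bounds_exist (Adm 1 Rlt_0_1)) as [S1 [BF Rd]].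
  pose proof (uniform_setting_family n Rr gR f u S1 BF Hn HR Hfpos Hsol Rd) as Uni.
  set (Pb := 1 + INR n * first_integral n 1 (u 1) Rr + Rr) in Uni.
  assert (HPb : 0 <= Pb) by (pose proof (first_integral_ref_nonneg Rd); pose proof (pos_INR n); unfold Pb; nra).
  destruct (estimate_i (gR := gR) Pb Rd HPb) as [C0 [HC0 E0]].
  destruct (estimate_ii (gR := gR) Pb Rd HPb) as [C1 [HC1 E1]].
  destruct (estimate_iii (gR := gR) Pb Rd) as [C2 [HC2 E2]].
  destruct (estimate_iv (gR := gR) Pb Rd) as [C3 [HC3 E3]].
  destruct (estimate_v (gR := gR) Pb Rd HPb) as [C4 [HC4 E4]].
  destruct (estimate_vi (gR := gR) Pb Rd HPb) as [C5 [HC5 E5]].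
  destruct (estimate_viii (gR := gR) Pb Rd HPb) as [C7 [HC7 E7]].
  exists 1. split; [lra|]. exists C0, C1, C2, C3, C4, C5, C7.
  do 7 (split; [assumption|]). split; [|split].
  - intros eps Heps. pose proof (Uni eps Heps) as U.
    exact (conj (E0 _ _ U) (conj (E1 _ _ U) (conj (E2 _ _ U) (conj (E3 _ _ U)
      (conj (E4 _ _ U) (conj (E5 _ _ U) (E7 _ _ U))))))).
  - intros alpha Ha. destruct (estimate_vii (gR := gR) Pb Rd alpha Ha) as [C6 [HC6 E6]].
    exists C6. split; [exact HC6|]. intros eps Heps. exact (E6 _ _ (Uni eps Heps)).
  - intros Hn2 alpha Ha. subst n.
    destruct (estimate_ix (gR := gR) Pb Rd HPb alpha Ha) as [C8 [HC8 E8]].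
    exists C8. split; [exact HC8|]. intros eps Heps. exact (E8 _ _ (Uni eps Heps)).
Qed.
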